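(* Let $A^!=T(A_1^* )/(R^\perp)$ be the quadratic dual of $A=A_k$, where $R=\operatorname{span}(r_1,\dots,r_7)\subset A_1\otimes A_1$. Identify $A^!_1=A_1^*$ with $\operatorname{Im}\mathbb{O}_k$ by letting the basis of $A_1^*$ dual to $x_1,\dots,x_7$ correspond to $o_1,\dots,o_7$. Then there are identifications $A^!_2=\operatorname{Im}\mathbb{O}_k$ and $A^!_3=k$ such that (1) the multiplication $A^!_1\times A^!_1\to A^!_2$ is $(u,v)\mapsto \operatorname{Im}(uv)$; (2) the multiplication $A^!_1\times A^!_1\times A^!_1\to A^!_3$ is $(u,v,w)\mapsto -\operatorname{Re}(uvw)$; and (3) $(A^!)^*\cong A^!$ as $A^!$-bimodules, i.e. $A^!$ is a symmetric Frobenius algebra.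
   Context: Let $k$ be a field of characteristic $\ne 2$. Label the points of the Fano plane by $1,\dots,7$ so that its directed lines are $123,145,167,246,275,374,365$. For $i,j,l$ put $\varepsilon^{ijl}=1$ if $(i,j,l)$ is a cyclic rotation of a directed line, $-1$ if $(j,i,l)$ is, and $0$ otherwise. $A_k=k\langle x_1,\dots,x_7\rangle/(r_1,\dots,r_7)$ with $\deg x_i=1$ and $r_i=\sum_{m,n}\varepsilon^{imn}x_mx_n$. The octonion algebra $\mathbb{O}_k$ is the unital non-associative $k$-algebra with basis $1,o_1,\dots,o_7$ and $o_ro_s=\sum_{i}\varepsilon^{rsi}o_i-\delta_{rs}$; $\operatorname{Im}\mathbb{O}_k=\operatorname{span}(o_1,\dots,o_7)$; conjugation $u\mapsto\bar u$ is the linear map fixing $1$ and negating each $o_i$; $\operatorname{Re}(u)=\tfrac12(u+\bar u)\in k$, $\operatorname{Im}(u)=\tfrac12(u-\bar u)$. In $\mathbb{O}_k$, products of three imaginary octonions are associative in the sense that $\operatorname{Re}((uv)w)=\operatorname{Re}(u(vw))$, so $\operatorname{Re}(uvw)$ is unambiguous. A graded algebra is symmetric Frobenius if it is finite-dimensional and isomorphic to its linear dual as a bimodule. *)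

From HB Require Import structures.
From mathcomp Require Import all_boot all_order all_algebra.
Set Implicit Arguments. Unset Strict Implicit. Unset Printing Implicit Defensive.
Import GRing.Theory.
Local Open Scope ring_scope.

(* Points 1..7 of the Fano plane are the ordinals 0..6
   (point p is the ordinal p-1). *)

Definition fano_lines : seq (nat * nat * nat) :=
  [:: (1,2,3); (1,4,5); (1,6,7); (2,4,6); (2,7,5); (3,7,4); (3,6,5)]%N.

Definition is_cyc_line (i j l : nat) : bool :=
  has (fun t : nat * nat * nat => let: (a, b, c) := t in
         [|| (i, j, l) == (a, b, c), (i, j, l) == (b, c, a) | (i, j, l) == (c, a, b)])
      fano_lines.

Definition eps (k : fieldType) (i j l : 'I_7) : k :=
  if is_cyc_line i.+1 j.+1 l.+1 then 1
  else if is_cyc_line j.+1 i.+1 l.+1 then -1 else 0.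

Record oct (k : fieldType) := Oct { oRe : k; oIm : 'I_7 -> k }.

(* o_r o_s = sum_i eps^{rsi} o_i - delta_{rs}, extended bilinearly, 1 unital *)
Definition omul (k : fieldType) (x y : oct k) : oct k :=
  Oct (oRe x * oRe y - \sum_(r < 7) oIm x r * oIm y r)
      (fun i => oRe x * oIm y i + oRe y * oIm x i
                + \sum_(r < 7) \sum_(s < 7) eps k r s i * oIm x r * oIm y s).

Definition imO (k : fieldType) (u : 'I_7 -> k) : oct k := Oct 0 u.

(* ---------- Tensor algebra T(A_1^* ) (in its completed form prod_n (A_1^* )^{(x)n}):
   an element is a function on words in the dual basis xi_1..xi_7 of x_1..x_7
   (the coefficient of xi_{w_1} (x) ... (x) xi_{w_n}). *)
Definition word := seq 'I_7.
Definition tens (k : fieldType) := word -> k.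

Definition tadd (k : fieldType) (x y : tens k) : tens k := fun w => x w + y w.
Definition tscale (k : fieldType) (c : k) (x : tens k) : tens k := fun w => c * x w.
Definition tmul (k : fieldType) (x y : tens k) : tens k :=
  fun w => \sum_(i < (size w).+1) x (take i w) * y (drop i w).
Definition tword (k : fieldType) (u : word) : tens k := fun w => (w == u)%:R.
Definition homog (k : fieldType) (n : nat) (x : tens k) : Prop :=
  forall w, size w != n -> x w = 0.
Definition hcomp (k : fieldType) (n : nat) (x : tens k) : tens k :=
  fun w => if size w == n then x w else 0.

(* The relations r_i = sum_{m,n} eps^{imn} x_m x_n in A_1 (x) A_1,
   given by their coefficients on x_m (x) x_n. *)
Definition rel_r (k : fieldType) (i : 'I_7) (m n : 'I_7) : k := eps k i m n.

(* canonical pairing (A_1^* (x) A_1^* ) x (A_1 (x) A_1) -> k,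
   <xi_a (x) xi_b, x_m (x) x_n> = delta_am delta_bn *)
Definition pair2 (k : fieldType) (rho : tens k) (r : 'I_7 -> 'I_7 -> k) : k :=
  \sum_(m < 7) \sum_(n < 7) rho [:: m; n] * r m n.

Definition Rperp (k : fieldType) (rho : tens k) : Prop :=
  homog 2 rho /\ forall c : 'I_7 -> k,
    pair2 rho (fun m n => \sum_(i < 7) c i * rel_r k i m n) = 0.

Definition Igen (k : fieldType) (g : tens k) : Prop :=
  exists (u v : word) (rho : tens k),
    Rperp rho /\ g = tmul (tmul (tword k u) rho) (tword k v).

Definition in_span_Igen (k : fieldType) (x : tens k) : Prop :=
  exists (m : nat) (c : 'I_m -> k) (g : 'I_m -> tens k),
    (forall i, Igen (g i)) /\ forall w, x w = \sum_(i < m) c i * g i w.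

(* membership in the (graded) ideal (R^perp): every homogeneous component is
   a finite linear combination of generators *)
Definition inI (k : fieldType) (x : tens k) : Prop :=
  forall n, in_span_Igen (hcomp n x).

(* A^!_1 = A_1^* identified with Im O: xi_i <-> o_i *)
Definition iota1 (k : fieldType) (u : tens k) : 'I_7 -> k := fun i => u [:: i].

(* A linear map psi : T_n -> k^7 induces an identification (linear isomorphism)
   A^!_n = T_n/I_n ~= Im O_k : it is linear, its kernel on T_n is exactly I_n,
   and it is onto. *)
Definition ident_ImO (k : fieldType) (n : nat) (psi : tens k -> 'I_7 -> k) : Prop :=
  (forall c x y i, psi (tadd (tscale c x) y) i = c * psi x i + psi y i) /\
  (forall x, homog n x -> ((forall i, psi x i = 0) <-> inI x)) /\
  (forall v : 'I_7 -> k, exists x, homog n x /\ forall i, psi x i = v i).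

Definition ident_k (k : fieldType) (n : nat) (psi : tens k -> k) : Prop :=
  (forall c x y, psi (tadd (tscale c x) y) = c * psi x + psi y) /\
  (forall x, homog n x -> (psi x = 0 <-> inI x)) /\
  (forall v : k, exists x, homog n x /\ psi x = v).

(* finite-dimensional: A^!_n = 0 for n large *)
Definition fin_dim_Ashriek (k : fieldType) : Prop :=
  exists N : nat, forall x : tens k, (forall w, (size w < N)%N -> x w = 0) -> inI x.

Definition tfunctional (k : fieldType) (f : tens k -> k) : Prop :=
  forall c x y, f (tadd (tscale c x) y) = c * f x + f y.

(* Phi x y = phi([x])([y]) for a map phi : A^! -> (A^!)^*, A^! = T/I;
   phi is a linear bimodule isomorphism, where (a.f.b)(y) = f(b y a). *)
Definition bimod_iso_dual (k : fieldType) (Phi : tens k -> tens k -> k) : Prop :=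
  (forall x, tfunctional (Phi x)) /\
  (forall y, tfunctional (fun x => Phi x y)) /\
  (forall x y, inI y -> Phi x y = 0) /\
  (forall x y, inI x -> Phi x y = 0) /\
  (forall a x b y, Phi (tmul (tmul a x) b) y = Phi x (tmul (tmul b y) a)) /\
  (forall x, (forall y, Phi x y = 0) -> inI x) /\
  (forall f : tens k -> k, tfunctional f -> (forall y, inI y -> f y = 0) ->
     exists x, forall y, f y = Phi x y).

Definition sym_frobenius_Ashriek (k : fieldType) : Prop :=
  fin_dim_Ashriek k /\ exists Phi : tens k -> tens k -> k, bimod_iso_dual Phi.

From HB Require Import structures.
From mathcomp Require Import all_boot all_order all_algebra.
From mathcomp Require Import ring zify.
From Stdlib Require Import FunctionalExtensionality.
Import GRing.Theory.
Set Implicit Arguments.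
Unset Strict Implicit.
Unset Printing Implicit Defensive.
Local Open Scope ring_scope.

(* Write [xi_1, ..., xi_7] for the basis of [A_1^*].  The space [R^perp] consists
   of the degree-2 tensors killed by [psi2 x i = sum_(m,n) eps^{mni} x_mn], so
   [psi2] identifies [A^!_2] with [Im O], sending [xi_a xi_b] to [Im (o_a o_b)].
   In degree 3 the cyclic symmetry of [eps] makes [psi3 x = sum eps^{abc} x_abc]
   vanish on [A_1^* R^perp + R^perp A_1^*]; conversely an explicit integral
   certificate puts every [xi_a xi_b xi_c - eps^{abc} xi_1 xi_2 xi_3] in that
   space, so [psi3] identifies [A^!_3] with [k], and all words of length 4
   vanish in [A^!].  Hence a class in [A^!] is determined by four coordinates
   in degrees 0..3, the form [<x, y> = psi3 (x y)] pairs degree [n] perfectly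
   with degree [3 - n], and [psi3 (x y) = psi3 (y x)] makes it a symmetric
   Frobenius form. *)

Section TensorAlgebra.
Variable k : fieldType.
Implicit Types (x y z : tens k) (u v w : word).

Lemma tmul_nil x y : tmul x y [::] = x [::] * y [::].
Proof. by rewrite /tmul big_ord_recl big_ord0 addr0. Qed.

Lemma tmul_cons x y a w :
  tmul x y (a :: w) = x [::] * y (a :: w) + tmul (fun w' => x (a :: w')) y w.
Proof. by rewrite /tmul big_ord_recl. Qed.

Lemma tmul1 x y a : tmul x y [:: a] = x [::] * y [:: a] + x [:: a] * y [::].
Proof. by rewrite /tmul !big_ord_recl big_ord0 addr0. Qed.

Lemma tmul2 x y a b :
  tmul x y [:: a; b] = x [::] * y [:: a; b] + x [:: a] * y [:: b] + x [:: a; b] * y [::].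
Proof. by rewrite /tmul !big_ord_recl big_ord0 /= addr0 !addrA. Qed.

Lemma tmul3 x y a b c :
  tmul x y [:: a; b; c] = x [::] * y [:: a; b; c] + x [:: a] * y [:: b; c]
    + x [:: a; b] * y [:: c] + x [:: a; b; c] * y [::].
Proof. by rewrite /tmul !big_ord_recl big_ord0 /= addr0 !addrA. Qed.

Lemma tmul_linl c x y z w :
  tmul (fun w => c * x w + y w) z w = c * tmul x z w + tmul y z w.
Proof. by rewrite /tmul mulr_sumr -big_split /=; apply: eq_bigr => i _; ring. Qed.

Lemma tmul_linr c x y z w :
  tmul z (fun w => c * x w + y w) w = c * tmul z x w + tmul z y w.
Proof. by rewrite /tmul mulr_sumr -big_split /=; apply: eq_bigr => i _; ring. Qed.

Lemma tmul_subl c x y z w :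
  tmul (fun w => x w - c * y w) z w = tmul x z w - c * tmul y z w.
Proof. by rewrite /tmul mulr_sumr -sumrB /=; apply: eq_bigr => i _; ring. Qed.

Lemma tmul_subr c x y z w :
  tmul z (fun w => x w - c * y w) w = tmul z x w - c * tmul z y w.
Proof. by rewrite /tmul mulr_sumr -sumrB /=; apply: eq_bigr => i _; ring. Qed.

Lemma tmul0l y w : tmul (fun _ => 0) y w = 0.
Proof. by rewrite /tmul big1 // => i _; rewrite mul0r. Qed.

Lemma tmul_suml z m (c : 'I_m -> k) (g : 'I_m -> tens k) w :
  tmul (fun w => \sum_(j < m) c j * g j w) z w = \sum_(j < m) c j * tmul (g j) z w.
Proof.
rewrite /tmul; under eq_bigr do rewrite mulr_suml.
by rewrite exchange_big; apply: eq_bigr => j _; rewrite mulr_sumr; apply: eq_bigr => i _; ring.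
Qed.

Lemma tmul_sumr z m (c : 'I_m -> k) (g : 'I_m -> tens k) w :
  tmul z (fun w => \sum_(j < m) c j * g j w) w = \sum_(j < m) c j * tmul z (g j) w.
Proof.
rewrite /tmul; under eq_bigr do rewrite mulr_sumr.
by rewrite exchange_big; apply: eq_bigr => j _; rewrite mulr_sumr; apply: eq_bigr => i _; ring.
Qed.

Lemma tmulA x y z : tmul (tmul x y) z = tmul x (tmul y z).
Proof.
apply: functional_extensionality => w.
elim: w x y => [|a w IH] x y; first by rewrite !tmul_nil mulrA.
rewrite tmul_cons tmul_nil.
have -> : (fun w' => tmul x y (a :: w')) =
          (fun w' => x [::] * y (a :: w') + tmul (fun w'' => x (a :: w'')) y w').
  by apply: functional_extensionality => w'; rewrite tmul_cons.
by rewrite tmul_linl IH [in RHS]tmul_cons [tmul y z (a :: w)]tmul_cons; ring.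
Qed.

Lemma tword_eq0 u w : size w != size u -> tword k u w = 0.
Proof. by move=> sw; rewrite /tword; case: eqP => // E; rewrite E eqxx in sw. Qed.

Lemma tmul_twordl u x w :
  tmul (tword k u) x w = if take (size u) w == u then x (drop (size u) w) else 0.
Proof.
elim: u w x => [|b u IH] w x.
  case: w => [|a w]; first by rewrite tmul_nil /tword mul1r.
  rewrite tmul_cons /tword mul1r /=.
  have -> : (fun w' : word => ((a :: w' == [::]) : nat)%:R) = (fun _ => 0 : k) by [].
  by rewrite tmul0l addr0.
case: w => [|a w]; first by rewrite tmul_nil /tword mul0r.
rewrite tmul_cons /tword /= mul0r add0r eqseq_cons.
case: (eqVneq a b) => [->|ab] /=.
  have -> : (fun w' : word => ((b :: w' == b :: u) : nat)%:R) = tword k u.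
    by apply: functional_extensionality => w'; rewrite /tword eqseq_cons eqxx.
  exact: IH.
have -> : (fun w' : word => ((a :: w' == b :: u) : nat)%:R) = (fun _ => 0 : k).
  by apply: functional_extensionality => w'; rewrite eqseq_cons (negbTE ab).
exact: tmul0l.
Qed.

Lemma tmul_twordr v x w :
  tmul x (tword k v) w =
  if (size v <= size w)%N && (drop (size w - size v) w == v)
  then x (take (size w - size v) w) else 0.
Proof.
elim: w x => [|a w IH] x.
  by rewrite tmul_nil /tword; case: v => [|b v] /=; rewrite ?mulr1 ?mulr0.
rewrite tmul_cons IH /tword.
have [le|lt] := leqP (size v) (size w).
  have -> : (a :: w == v) = false by apply/eqP => E; move: le; rewrite -E /= ltnn.
  by rewrite mulr0 add0r /= (leq_trans le (leqnSn _)) /= subSn.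
have -> : ((size w).+1 - size v)%N = 0%N by apply/eqP; rewrite subn_eq0.
rewrite /= ?drop0 ?take0 addr0.
by case: (eqVneq (a :: w) v) => [<-|ne] /=; rewrite ?leqnn ?mulr1 ?mulr0 ?andbF.
Qed.

Lemma tmul1l x : tmul (tword k [::]) x = x.
Proof. by apply: functional_extensionality => w; rewrite tmul_twordl take0 drop0. Qed.

Lemma tmul1r x : tmul x (tword k [::]) = x.
Proof.
by apply: functional_extensionality => w; rewrite tmul_twordr subn0 drop_size take_size.
Qed.

Lemma tmul_tword u v : tmul (tword k u) (tword k v) = tword k (u ++ v).
Proof.
apply: functional_extensionality => w; rewrite tmul_twordl /tword.
have [le|lt] := leqP (size u) (size w).
  rewrite -{3}(cat_take_drop (size u) w) eqseq_cat ?size_take_min ?(minn_idPl le) //.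
  by case: (take _ _ == u).
rewrite take_oversize ?(ltnW lt) //.
have -> : (w == u) = false by apply/eqP => E; move: lt; rewrite E ltnn.
have -> // : (w == u ++ v) = false.
by apply/eqP => E; move: lt; rewrite E size_cat ltnNge leq_addr.
Qed.

Lemma sandwichE u rho v w : homog 2 rho ->
  tmul (tmul (tword k u) rho) (tword k v) w =
  if (size w == size u + 2 + size v)%N && (take (size u) w == u) && (drop (size u + 2) w == v)
  then rho (take 2 (drop (size u) w)) else 0.
Proof.
move=> hr; rewrite tmulA tmul_twordl.
case T: (take (size u) w == u); last by rewrite andbF.
have hu : (size u <= size w)%N.
  by move/eqP: T => /(congr1 size); rewrite size_take_min => <-; apply: geq_minr.
rewrite tmul_twordr size_drop andbT.
case: (eqVneq (size w) (size u + 2 + size v)%N) => [E|NE] /=.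
  rewrite E (_ : (size u + 2 + size v - size u - size v = 2)%N); last by lia.
  rewrite (_ : (size v <= size u + 2 + size v - size u)%N); last by apply/leP; lia.
  by rewrite drop_drop addnC.
case: ifP => // /andP [hv _]; apply: hr.
rewrite size_take_min size_drop; apply/eqP => E2.
by move: NE E2 hu hv; rewrite /minn; case: ifP; lia.
Qed.

End TensorAlgebra.

Section Ideal.
Variable k : fieldType.
Implicit Types (x y : tens k) (u v w : word).

Lemma span0 : in_span_Igen (k := k) (fun _ => 0).
Proof.
exists 0%N, (fun _ => 0), (fun _ _ => 0); split; first by case.
by move=> w; rewrite big_ord0.
Qed.

Lemma span_ext x y : in_span_Igen x -> (forall w, x w = y w) -> in_span_Igen y.
Proof. by move=> [m [c [g [G E]]]] H; exists m, c, g; split => // w; rewrite -H. Qed.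

Lemma spanD c x y : in_span_Igen x -> in_span_Igen y ->
  in_span_Igen (fun w => c * x w + y w).
Proof.
move=> [m1 [c1 [g1 [G1 E1]]]] [m2 [c2 [g2 [G2 E2]]]].
exists (m1 + m2)%N,
  (fun i => match split i with inl j => c * c1 j | inr j => c2 j end),
  (fun i => match split i with inl j => g1 j | inr j => g2 j end).
split; first by move=> i; case: (split i) => j; [apply: G1 | apply: G2].
move=> w; rewrite big_split_ord E1 E2 mulr_sumr; congr (_ + _).
  by apply: eq_bigr => j _; rewrite (unsplitK (inl j)) mulrA.
by apply: eq_bigr => j _; rewrite (unsplitK (inr j)).
Qed.

Lemma span_Igen (g : tens k) : Igen g -> in_span_Igen g.
Proof.
by move=> G; exists 1%N, (fun _ => 1), (fun _ => g); split => // w; rewrite big_ord1 mul1r.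
Qed.

Lemma span_sum (I : Type) (s : seq I) (c : I -> k) (g : I -> tens k) :
  (forall i, in_span_Igen (g i)) -> in_span_Igen (fun w => \sum_(i <- s) c i * g i w).
Proof.
elim: s => [|i s IH] H; first by apply: span_ext span0 _ => w; rewrite big_nil.
by apply: span_ext (spanD (c i) (H i) (IH H)) _ => w; rewrite big_cons.
Qed.

Lemma span_tmull u x : in_span_Igen x -> in_span_Igen (tmul (tword k u) x).
Proof.
move=> [m [c [g [G E]]]]; exists m, c, (fun i => tmul (tword k u) (g i)); split.
  move=> i; case: (G i) => [u' [v' [rho [R ->]]]]; exists (u ++ u'), v', rho.
  by rewrite -tmul_tword !tmulA.
have -> : x = (fun w => \sum_(i < m) c i * g i w) by apply: functional_extensionality.
by move=> w; rewrite tmul_sumr.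
Qed.

Lemma span_tmulr v x : in_span_Igen x -> in_span_Igen (tmul x (tword k v)).
Proof.
move=> [m [c [g [G E]]]]; exists m, c, (fun i => tmul (g i) (tword k v)); split.
  move=> i; case: (G i) => [u' [v' [rho [R ->]]]]; exists u', (v' ++ v), rho.
  by rewrite -tmul_tword !tmulA.
have -> : x = (fun w => \sum_(i < m) c i * g i w) by apply: functional_extensionality.
by move=> w; rewrite tmul_suml.
Qed.

Lemma homog_hcomp n x : homog n (hcomp n x).
Proof. by move=> w /negbTE; rewrite /hcomp => ->. Qed.

End Ideal.

Definition o0 : 'I_7 := @Ordinal 7 0 isT.
Definition o1 : 'I_7 := @Ordinal 7 1 isT.
Definition o2 : 'I_7 := @Ordinal 7 2 isT.
Definition o3 : 'I_7 := @Ordinal 7 3 isT.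
Definition o4 : 'I_7 := @Ordinal 7 4 isT.
Definition o5 : 'I_7 := @Ordinal 7 5 isT.
Definition o6 : 'I_7 := @Ordinal 7 6 isT.
Definition ords : seq 'I_7 := [:: o0; o1; o2; o3; o4; o5; o6].

Lemma mem_ords (i : 'I_7) : i \in ords.
Proof. by case: i => [[|[|[|[|[|[|[|m]]]]]]] Hm]. Qed.

Lemma ords_all1 (P : pred 'I_7) : all P ords -> forall i, P i.
Proof. by move/allP => H i; apply/H/mem_ords. Qed.

Lemma ords_all2 (P : 'I_7 -> pred 'I_7) :
  all (fun i => all (P i) ords) ords -> forall i j, P i j.
Proof. by move=> H i; apply: ords_all1; move: i; apply: ords_all1. Qed.

Lemma ords_all3 (P : 'I_7 -> 'I_7 -> pred 'I_7) :
  all (fun i => all (fun j => all (P i j) ords) ords) ords -> forall i j l, P i j l.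
Proof. by move=> H i j; apply: ords_all1; move: i j; apply: ords_all2. Qed.

Lemma sum_ords (R : nmodType) (F : 'I_7 -> R) : \sum_(i < 7) F i = \sum_(i <- ords) F i.
Proof.
apply: perm_big; apply: uniq_perm; [exact: index_enum_uniq | by [] |].
by move=> i; rewrite mem_index_enum mem_ords.
Qed.

Definition eps_int (i j l : 'I_7) : int :=
  if is_cyc_line i.+1 j.+1 l.+1 then 1
  else if is_cyc_line j.+1 i.+1 l.+1 then -1 else 0.

(* [o_(fac1 i) o_(fac2 i) = o_i] *)
Definition fac1 (i : 'I_7) : 'I_7 := nth o0 [:: o1; o2; o0; o2; o0; o1; o0] i.
Definition fac2 (i : 'I_7) : 'I_7 := nth o0 [:: o2; o0; o1; o6; o3; o3; o5] i.
Definition im_word (i : 'I_7) : word := [:: fac1 i; fac2 i].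
Definition top_word : word := [:: o0; o1; o2].

Section Fano.
Variable k : fieldType.

Lemma intr_sum (I : Type) (s : seq I) (F : I -> int) :
  (\sum_(i <- s) F i)%:~R = \sum_(i <- s) (F i)%:~R :> k.
Proof. by elim: s => [|i s IH]; rewrite ?big_nil // !big_cons intrD IH. Qed.

Lemma intr_nat_bool (b : bool) : (b%:R : int)%:~R = b%:R :> k.
Proof. by case: b. Qed.

Lemma eps_intE i j l : eps k i j l = (eps_int i j l)%:~R.
Proof. by rewrite /eps /eps_int; do 2?case: ifP. Qed.

Lemma eps_cyc i j l : eps k i j l = eps k j l i.
Proof.
by rewrite !eps_intE; congr intmul; apply/eqP; move: i j l; apply: ords_all3; vm_compute.
Qed.

Lemma eps_diag i j : eps k i i j = 0.
Proof.
by rewrite eps_intE (_ : eps_int i i j = 0) //; apply/eqP; move: i j; apply: ords_all2; vm_compute.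
Qed.

Lemma eps_fac i j : eps k (fac1 i) (fac2 i) j = (i == j)%:R.
Proof.
rewrite eps_intE -intr_nat_bool.
by congr intmul; apply/eqP; move: i j; apply: ords_all2; vm_compute.
Qed.

Lemma eps_top : eps k o0 o1 o2 = 1.
Proof. by rewrite eps_intE. Qed.

End Fano.

Section Coordinates.
Variable k : fieldType.
Implicit Types (x y : tens k) (u v w : word).

Lemma sum_delta (i0 : 'I_7) (F : 'I_7 -> k) : \sum_(i < 7) (i0 == i)%:R * F i = F i0.
Proof.
rewrite (bigD1 i0) //= eqxx mul1r big1 ?addr0 // => i.
by rewrite eq_sym => /negbTE ->; rewrite mul0r.
Qed.

Definition psi2 x (i : 'I_7) : k := \sum_(m < 7) \sum_(n < 7) eps k m n i * x [:: m; n].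
Definition psi3 x : k :=
  \sum_(a < 7) \sum_(b < 7) \sum_(c < 7) eps k a b c * x [:: a; b; c].

Lemma psi2_ext x y i : (forall m n, x [:: m; n] = y [:: m; n]) -> psi2 x i = psi2 y i.
Proof. by move=> H; apply: eq_bigr => m _; apply: eq_bigr => n _; rewrite H. Qed.

Lemma psi3_ext x y : (forall a b c, x [:: a; b; c] = y [:: a; b; c]) -> psi3 x = psi3 y.
Proof.
by move=> H; apply: eq_bigr => a _; apply: eq_bigr => b _; apply: eq_bigr => c _; rewrite H.
Qed.

Lemma psi2_sum m (c : 'I_m -> k) (g : 'I_m -> tens k) i :
  psi2 (fun w => \sum_(j < m) c j * g j w) i = \sum_(j < m) c j * psi2 (g j) i.
Proof.
rewrite /psi2; under eq_bigr do under eq_bigr do rewrite mulr_sumr.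
under eq_bigr do rewrite exchange_big.
rewrite exchange_big; apply: eq_bigr => j _; rewrite mulr_sumr.
by apply: eq_bigr => a _; rewrite mulr_sumr; apply: eq_bigr => b _; ring.
Qed.

Lemma psi3_sum m (c : 'I_m -> k) (g : 'I_m -> tens k) :
  psi3 (fun w => \sum_(j < m) c j * g j w) = \sum_(j < m) c j * psi3 (g j).
Proof.
rewrite /psi3; under eq_bigr do under eq_bigr do under eq_bigr do rewrite mulr_sumr.
under eq_bigr do under eq_bigr do rewrite exchange_big.
under eq_bigr do rewrite exchange_big.
rewrite exchange_big; apply: eq_bigr => j _; rewrite mulr_sumr.
apply: eq_bigr => a _; rewrite mulr_sumr; apply: eq_bigr => b _.
by rewrite mulr_sumr; apply: eq_bigr => d _; ring.
Qed.

Lemma psi2_lin c x y i : psi2 (fun w => c * x w + y w) i = c * psi2 x i + psi2 y i.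
Proof.
rewrite /psi2 mulr_sumr -big_split; apply: eq_bigr => m _.
by rewrite mulr_sumr -big_split; apply: eq_bigr => n _ /=; ring.
Qed.

Lemma psi3_lin c x y : psi3 (fun w => c * x w + y w) = c * psi3 x + psi3 y.
Proof.
rewrite /psi3 mulr_sumr -big_split; apply: eq_bigr => a _.
rewrite mulr_sumr -big_split; apply: eq_bigr => b _.
by rewrite mulr_sumr -big_split; apply: eq_bigr => d _ /=; ring.
Qed.

Lemma psi2_sub x y i : psi2 (fun w => x w - y w) i = psi2 x i - psi2 y i.
Proof.
rewrite (psi2_ext (y := fun w => -1 * y w + x w)) => [|m n]; last by rewrite mulN1r addrC.
by rewrite psi2_lin mulN1r addrC.
Qed.

Lemma psi3_sub x y : psi3 (fun w => x w - y w) = psi3 x - psi3 y.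
Proof.
rewrite (psi3_ext (y := fun w => -1 * y w + x w)) => [|a b c]; last by rewrite mulN1r addrC.
by rewrite psi3_lin mulN1r addrC.
Qed.

Lemma psi3Z c x : psi3 (fun w => c * x w) = c * psi3 x.
Proof.
rewrite /psi3 mulr_sumr; apply: eq_bigr => a _; rewrite mulr_sumr.
by apply: eq_bigr => b _; rewrite mulr_sumr; apply: eq_bigr => d _; ring.
Qed.

Lemma psi2_tword2 a b i : psi2 (tword k [:: a; b]) i = eps k a b i.
Proof.
rewrite /psi2 -(sum_delta a (fun m => eps k m b i)); apply: eq_bigr => m _.
rewrite -(sum_delta b (fun n => eps k m n i)) mulr_sumr; apply: eq_bigr => n _.
by rewrite /tword !eqseq_cons andbT eq_sym [b == n]eq_sym; do 2!case: eqP => _;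
  rewrite /= ?(mul1r, mul0r, mulr1, mulr0).
Qed.

Lemma psi3_tword3 a b c : psi3 (tword k [:: a; b; c]) = eps k a b c.
Proof.
rewrite /psi3 -(sum_delta a (fun m => eps k m b c)); apply: eq_bigr => m _.
rewrite -(sum_delta b (fun n => eps k m n c)) mulr_sumr; apply: eq_bigr => n _.
rewrite -(sum_delta c (fun p => eps k m n p)) !mulr_sumr; apply: eq_bigr => p _.
by rewrite /tword !eqseq_cons andbT eq_sym [b == n]eq_sym [c == p]eq_sym;
  do 3!case: eqP => _; rewrite /= ?(mul1r, mul0r, mulr1, mulr0).
Qed.

Lemma psi2_tmul x y i : psi2 (tmul x y) i = x [::] * psi2 y i
  + \sum_(m < 7) \sum_(n < 7) eps k m n i * (x [:: m] * y [:: n]) + psi2 x i * y [::].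
Proof.
rewrite /psi2 mulr_sumr mulr_suml -!big_split; apply: eq_bigr => m _.
rewrite mulr_sumr mulr_suml -!big_split; apply: eq_bigr => n _ /=.
by rewrite tmul2; ring.
Qed.

Lemma psi3_tmul x y : psi3 (tmul x y) = x [::] * psi3 y + \sum_(a < 7) x [:: a] * psi2 y a
  + \sum_(c < 7) psi2 x c * y [:: c] + psi3 x * y [::].
Proof.
have E : forall (F1 F2 F3 F4 : 'I_7 -> 'I_7 -> 'I_7 -> k),
    \sum_(a < 7) \sum_(b < 7) \sum_(c < 7) (F1 a b c + F2 a b c + F3 a b c + F4 a b c) =
    \sum_(a < 7) \sum_(b < 7) \sum_(c < 7) F1 a b c
    + \sum_(a < 7) \sum_(b < 7) \sum_(c < 7) F2 a b c
    + \sum_(a < 7) \sum_(b < 7) \sum_(c < 7) F3 a b c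
    + \sum_(a < 7) \sum_(b < 7) \sum_(c < 7) F4 a b c.
  move=> F1 F2 F3 F4; rewrite -!big_split; apply: eq_bigr => a _.
  by rewrite -!big_split; apply: eq_bigr => b _; rewrite -!big_split.
rewrite /psi3; under eq_bigr do under eq_bigr do under eq_bigr do rewrite tmul3 !mulrDr.
rewrite E; congr (_ + _ + _ + _).
- rewrite mulr_sumr; apply: eq_bigr => a _; rewrite mulr_sumr.
  by apply: eq_bigr => b _; rewrite mulr_sumr; apply: eq_bigr => c _; ring.
- apply: eq_bigr => a _; rewrite /psi2 mulr_sumr; apply: eq_bigr => b _.
  by rewrite mulr_sumr; apply: eq_bigr => c _; rewrite eps_cyc; ring.
- under eq_bigr do rewrite exchange_big.
  rewrite exchange_big; apply: eq_bigr => c _; rewrite /psi2 mulr_suml.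
  by apply: eq_bigr => a _; rewrite mulr_suml; apply: eq_bigr => b _; ring.
- rewrite mulr_suml; apply: eq_bigr => a _; rewrite mulr_suml.
  by apply: eq_bigr => b _; rewrite mulr_suml; apply: eq_bigr => c _; ring.
Qed.

Lemma psi3_tmulC x y : psi3 (tmul x y) = psi3 (tmul y x).
Proof.
rewrite !psi3_tmul.
have -> : \sum_(c < 7) psi2 y c * x [:: c] = \sum_(a < 7) x [:: a] * psi2 y a.
  by apply: eq_bigr => i _; rewrite mulrC.
have -> : \sum_(c < 7) psi2 x c * y [:: c] = \sum_(a < 7) y [:: a] * psi2 x a.
  by apply: eq_bigr => i _; rewrite mulrC.
ring.
Qed.

Lemma RperpP rho : Rperp rho <-> homog 2 rho /\ (forall i, psi2 rho i = 0).
Proof.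
have pairE c : pair2 rho (fun m n => \sum_(i < 7) c i * rel_r k i m n)
             = \sum_(i < 7) c i * psi2 rho i.
  rewrite /pair2 /rel_r /psi2; under eq_bigr do under eq_bigr do rewrite mulr_sumr.
  under eq_bigr do rewrite exchange_big.
  rewrite exchange_big; apply: eq_bigr => j _; rewrite mulr_sumr.
  apply: eq_bigr => a _; rewrite mulr_sumr; apply: eq_bigr => b _.
  by rewrite eps_cyc; ring.
split=> [[h P]|[h P]]; split=> //.
  by move=> i; have := P (fun j => (i == j)%:R); rewrite pairE sum_delta.
by move=> c; rewrite pairE big1 // => i _; rewrite P mulr0.
Qed.

(* [x [::]], [x [:: a]], [psi2 x] and [psi3 x] are the coordinates of the class
   of [x] in [A^! = k + A_1^* + Im O + k]. *)
Definition null_coords x : Prop :=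
  [/\ x [::] = 0, forall a, x [:: a] = 0, forall i, psi2 x i = 0 & psi3 x = 0].

Lemma null_coords_tmulr x y : null_coords x -> null_coords (tmul x y).
Proof.
case=> x0 x1 x2 x3; split=> [|a|i|].
- by rewrite tmul_nil x0 mul0r.
- by rewrite tmul1 x0 x1 !mul0r addr0.
- rewrite psi2_tmul x0 x2 big1 ?mul0r ?addr0 // => m _.
  by rewrite big1 // => n _; rewrite x1 mul0r mulr0.
rewrite psi3_tmul x0 x3 !mul0r add0r addr0 !big1 ?addr0 // => a _.
  by rewrite x2 mul0r.
by rewrite x1 mul0r.
Qed.

Lemma null_coords_tmull x y : null_coords x -> null_coords (tmul y x).
Proof.
case=> x0 x1 x2 x3; split=> [|a|i|].
- by rewrite tmul_nil x0 mulr0.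
- by rewrite tmul1 x0 x1 !mulr0 addr0.
- rewrite psi2_tmul x0 x2 big1 ?mulr0 ?addr0 // => m _.
  by rewrite big1 // => n _; rewrite x1 !mulr0.
rewrite psi3_tmul x0 x3 !mulr0 add0r addr0 !big1 ?addr0 // => a _.
  by rewrite x1 mulr0.
by rewrite x2 mulr0.
Qed.

Lemma null_coords_span x : in_span_Igen x -> null_coords x.
Proof.
move=> [m [c [g [G E]]]].
have Ng j : null_coords (g j).
  case: (G j) => [u [v [rho [R ->]]]]; apply/null_coords_tmulr/null_coords_tmull.
  have [h P] := proj1 (RperpP rho) R.
  by split=> [|a||]; rewrite 1?h // /psi3 big1 // => a _; rewrite big1 // => b _;
    rewrite big1 // => d _; rewrite h ?mulr0.
have -> : x = (fun w => \sum_(j < m) c j * g j w) by apply: functional_extensionality.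
split=> [|a|i|]; rewrite ?psi2_sum ?psi3_sum big1 // => j _; have [] := Ng j.
- by move=> -> *; rewrite mulr0.
- by move=> _ -> *; rewrite mulr0.
- by move=> _ _ -> *; rewrite mulr0.
- by move=> _ _ _ ->; rewrite mulr0.
Qed.

Lemma null_coords_inI x : inI x -> null_coords x.
Proof.
move=> H; have N n := null_coords_span (H n).
split=> [|a|i|].
- by case: (N 0%N); rewrite /hcomp.
- by case: (N 1%N) => _ /(_ a); rewrite /hcomp.
- by have [_ _ P _] := N 2%N; exact: P.
- by have [_ _ _ P] := N 3%N; exact: P.
Qed.

End Coordinates.

(* [(u, a, b, v)] stands for the generator [xi_u rel2(a, b) xi_v] of [(R^perp)],
   where [rel2 a b = xi_a xi_b - sum_j eps^{abj} xi_(fac1 j) xi_(fac2 j)]. *)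
Definition gen_term := (word * 'I_7 * 'I_7 * word)%type.

Definition rel2_int (a b : 'I_7) (w : word) : int :=
  (w == [:: a; b])%:R - \sum_(j <- ords) eps_int a b j * (w == im_word j)%:R.

Definition gen_int (t : gen_term) (w : word) : int :=
  let: (u, a, b, v) := t in
  if (size w == size u + 2 + size v)%N && (take (size u) w == u) && (drop (size u + 2) w == v)
  then rel2_int a b (take 2 (drop (size u) w)) else 0.

Definition comb_int (c : seq (int * gen_term)) (w : word) : int :=
  \sum_(t <- c) t.1 * gen_int t.2 w.

Definition deg3_target_int (u w : word) : int :=
  (w == u)%:R - (if u is [:: a; b; c] then eps_int a b c else 0) * (w == top_word)%:R.

(* An integral certificate: for every word [abc], the entry for [abc] expresses
   [xi_abc - eps^{abc} xi_1 xi_2 xi_3] as a combination of degree-3 generators. *)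
Definition deg3_cert : seq (word * seq (int * gen_term)) := [::
([:: o0; o1; o2], [:: ]);
([:: o0; o0; o0], [:: (1, ([::], o0, o0, [:: o0]))]);
([:: o0; o0; o1], [:: (1, ([::], o0, o0, [:: o1]))]);
([:: o1; o0; o0], [:: (1, ([:: o1], o0, o0, [::]))]);
([:: o0; o0; o2], [:: (1, ([::], o0, o0, [:: o2]))]);
([:: o2; o0; o0], [:: (1, ([:: o2], o0, o0, [::]))]);
([:: o0; o0; o3], [:: (1, ([::], o0, o0, [:: o3]))]);
([:: o3; o0; o0], [:: (1, ([:: o3], o0, o0, [::]))]);
([:: o0; o0; o4], [:: (1, ([::], o0, o0, [:: o4]))]);
([:: o4; o0; o0], [:: (1, ([:: o4], o0, o0, [::]))]);
([:: o0; o0; o5], [:: (1, ([::], o0, o0, [:: o5]))]);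
([:: o5; o0; o0], [:: (1, ([:: o5], o0, o0, [::]))]);
([:: o0; o0; o6], [:: (1, ([::], o0, o0, [:: o6]))]);
([:: o6; o0; o0], [:: (1, ([:: o6], o0, o0, [::]))]);
([:: o0; o2; o0], [:: (1, ([::], o0, o2, [:: o0])); (-1, ([:: o2], o0, o0, [::]))]);
([:: o0; o2; o6], [:: (1, ([:: o0], o0, o4, [::])); (-1, ([::], o0, o0, [:: o4]))]);
([:: o0; o1; o3], [:: (1, ([:: o0], o0, o6, [::])); (-1, ([::], o0, o0, [:: o6]))]);
([:: o0; o1; o0], [:: (1, ([::], o1, o0, [:: o0])); (-1, ([:: o1], o0, o0, [::]))]);
([:: o1; o0; o2], [:: (1, ([::], o1, o0, [:: o2]))]);
([:: o1; o0; o3], [:: (1, ([::], o1, o0, [:: o3])); (-1, ([:: o0], o0, o6, [::])); (1, ([::], o0, o0, [:: o6]))]);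
([:: o1; o1; o0], [:: (1, ([::], o1, o1, [:: o0]))]);
([:: o0; o1; o1], [:: (1, ([:: o0], o1, o1, [::]))]);
([:: o1; o1; o1], [:: (1, ([::], o1, o1, [:: o1]))]);
([:: o1; o1; o2], [:: (1, ([::], o1, o1, [:: o2]))]);
([:: o2; o1; o1], [:: (1, ([:: o2], o1, o1, [::]))]);
([:: o1; o1; o3], [:: (1, ([::], o1, o1, [:: o3]))]);
([:: o3; o1; o1], [:: (1, ([:: o3], o1, o1, [::]))]);
([:: o1; o1; o4], [:: (1, ([::], o1, o1, [:: o4]))]);
([:: o4; o1; o1], [:: (1, ([:: o4], o1, o1, [::]))]);
([:: o1; o1; o5], [:: (1, ([::], o1, o1, [:: o5]))]);
([:: o5; o1; o1], [:: (1, ([:: o5], o1, o1, [::]))]);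
([:: o1; o1; o6], [:: (1, ([::], o1, o1, [:: o6]))]);
([:: o6; o1; o1], [:: (1, ([:: o6], o1, o1, [::]))]);
([:: o0; o1; o4], [:: (1, ([:: o0], o1, o4, [::])); (-1, ([::], o0, o0, [:: o5]))]);
([:: o1; o0; o5], [:: (1, ([:: o1], o1, o4, [::])); (-1, ([::], o1, o1, [:: o4]))]);
([:: o0; o1; o5], [:: (1, ([:: o0], o1, o5, [::])); (-1, ([:: o0], o0, o4, [::])); (1, ([::], o0, o0, [:: o4]))]);
([:: o1; o2; o6], [:: (1, ([:: o1], o1, o5, [::])); (-1, ([::], o1, o1, [:: o5]))]);
([:: o0; o1; o6], [:: (1, ([:: o0], o1, o6, [::])); (1, ([::], o0, o0, [:: o3]))]);
([:: o0; o2; o1], [:: (1, ([:: o0], o2, o1, [::]))]);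
([:: o1; o2; o1], [:: (1, ([::], o2, o1, [:: o1])); (-1, ([:: o2], o1, o1, [::]))]);
([:: o2; o1; o6], [:: (1, ([::], o2, o1, [:: o6])); (-1, ([:: o1], o1, o5, [::])); (1, ([::], o1, o1, [:: o5]))]);
([:: o2; o2; o0], [:: (1, ([::], o2, o2, [:: o0]))]);
([:: o0; o2; o2], [:: (1, ([:: o0], o2, o2, [::]))]);
([:: o2; o2; o1], [:: (1, ([::], o2, o2, [:: o1]))]);
([:: o1; o2; o2], [:: (1, ([:: o1], o2, o2, [::]))]);
([:: o2; o2; o2], [:: (1, ([::], o2, o2, [:: o2]))]);
([:: o2; o2; o3], [:: (1, ([::], o2, o2, [:: o3]))]);
([:: o3; o2; o2], [:: (1, ([:: o3], o2, o2, [::]))]);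
([:: o2; o2; o4], [:: (1, ([::], o2, o2, [:: o4]))]);
([:: o4; o2; o2], [:: (1, ([:: o4], o2, o2, [::]))]);
([:: o2; o2; o5], [:: (1, ([::], o2, o2, [:: o5]))]);
([:: o5; o2; o2], [:: (1, ([:: o5], o2, o2, [::]))]);
([:: o2; o2; o6], [:: (1, ([::], o2, o2, [:: o6]))]);
([:: o6; o2; o2], [:: (1, ([:: o6], o2, o2, [::]))]);
([:: o0; o2; o3], [:: (1, ([:: o0], o2, o3, [::])); (-1, ([::], o0, o0, [:: o5]))]);
([:: o1; o2; o3], [:: (1, ([:: o1], o2, o3, [::])); (-1, ([:: o1], o1, o4, [::])); (1, ([::], o1, o1, [:: o4]))]);
([:: o2; o0; o5], [:: (1, ([:: o2], o2, o3, [::])); (-1, ([::], o2, o2, [:: o3]))]);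
([:: o0; o2; o4], [:: (1, ([:: o0], o2, o4, [::])); (-1, ([:: o0], o0, o6, [::])); (1, ([::], o0, o0, [:: o6]))]);
([:: o1; o2; o4], [:: (1, ([:: o1], o2, o4, [::])); (-1, ([::], o1, o1, [:: o3]))]);
([:: o2; o1; o3], [:: (1, ([:: o2], o2, o4, [::])); (-1, ([::], o2, o2, [:: o4]))]);
([:: o0; o2; o5], [:: (1, ([:: o0], o2, o5, [::])); (1, ([::], o0, o0, [:: o3]))]);
([:: o1; o2; o5], [:: (1, ([:: o1], o2, o5, [::])); (1, ([::], o1, o0, [:: o3])); (-1, ([:: o0], o0, o6, [::])); (1, ([::], o0, o0, [:: o6]))]);
([:: o2; o0; o3], [:: (-1, ([:: o2], o2, o5, [::])); (1, ([::], o2, o2, [:: o5]))]);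
([:: o0; o3; o0], [:: (1, ([::], o3, o0, [:: o0])); (-1, ([:: o3], o0, o0, [::]))]);
([:: o1; o3; o0], [:: (1, ([:: o1], o3, o0, [::])); (-1, ([::], o1, o0, [:: o3])); (1, ([:: o0], o0, o6, [::])); (-1, ([::], o0, o0, [:: o6]))]);
([:: o2; o3; o0], [:: (1, ([:: o2], o3, o0, [::])); (1, ([:: o2], o2, o5, [::])); (-1, ([::], o2, o2, [:: o5]))]);
([:: o3; o1; o0], [:: (1, ([::], o3, o1, [:: o0])); (-1, ([:: o1], o3, o0, [::])); (1, ([::], o1, o0, [:: o3])); (-1, ([:: o0], o0, o6, [::])); (1, ([::], o0, o0, [:: o6]))]);
([:: o0; o3; o1], [:: (1, ([:: o0], o3, o1, [::])); (-1, ([:: o0], o0, o6, [::])); (1, ([::], o0, o0, [:: o6]))]);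
([:: o1; o3; o1], [:: (1, ([::], o3, o1, [:: o1])); (-1, ([:: o3], o1, o1, [::]))]);
([:: o2; o3; o1], [:: (1, ([:: o2], o3, o1, [::])); (-1, ([:: o2], o2, o4, [::])); (1, ([::], o2, o2, [:: o4]))]);
([:: o0; o3; o2], [:: (1, ([:: o0], o3, o2, [::])); (1, ([::], o0, o0, [:: o5]))]);
([:: o1; o3; o2], [:: (1, ([:: o1], o3, o2, [::])); (1, ([:: o1], o1, o4, [::])); (-1, ([::], o1, o1, [:: o4]))]);
([:: o0; o5; o2], [:: (-1, ([::], o3, o2, [:: o2])); (1, ([:: o3], o2, o2, [::]))]);
([:: o2; o3; o2], [:: (1, ([:: o2], o3, o2, [::])); (1, ([:: o2], o2, o3, [::])); (-1, ([::], o2, o2, [:: o3]))]);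
([:: o3; o3; o0], [:: (1, ([::], o3, o3, [:: o0]))]);
([:: o0; o3; o3], [:: (1, ([:: o0], o3, o3, [::]))]);
([:: o3; o3; o1], [:: (1, ([::], o3, o3, [:: o1]))]);
([:: o1; o3; o3], [:: (1, ([:: o1], o3, o3, [::]))]);
([:: o3; o3; o2], [:: (1, ([::], o3, o3, [:: o2]))]);
([:: o2; o3; o3], [:: (1, ([:: o2], o3, o3, [::]))]);
([:: o3; o3; o3], [:: (1, ([::], o3, o3, [:: o3]))]);
([:: o3; o3; o4], [:: (1, ([::], o3, o3, [:: o4]))]);
([:: o4; o3; o3], [:: (1, ([:: o4], o3, o3, [::]))]);
([:: o3; o3; o5], [:: (1, ([::], o3, o3, [:: o5]))]);
([:: o5; o3; o3], [:: (1, ([:: o5], o3, o3, [::]))]);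
([:: o3; o3; o6], [:: (1, ([::], o3, o3, [:: o6]))]);
([:: o6; o3; o3], [:: (1, ([:: o6], o3, o3, [::]))]);
([:: o0; o3; o4], [:: (1, ([:: o0], o3, o4, [::]))]);
([:: o3; o4; o1], [:: (1, ([::], o3, o4, [:: o1])); (1, ([::], o2, o1, [:: o1])); (-1, ([:: o2], o1, o1, [::]))]);
([:: o1; o3; o4], [:: (1, ([:: o1], o3, o4, [::])); (1, ([::], o1, o1, [:: o2]))]);
([:: o3; o4; o2], [:: (1, ([::], o3, o4, [:: o2])); (1, ([:: o1], o2, o2, [::]))]);
([:: o3; o4; o3], [:: (1, ([::], o3, o4, [:: o3])); (1, ([:: o1], o2, o3, [::])); (-1, ([:: o1], o1, o4, [::])); (1, ([::], o1, o1, [:: o4]))]);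
([:: o3; o1; o2], [:: (-1, ([:: o3], o3, o4, [::])); (1, ([::], o3, o3, [:: o4]))]);
([:: o3; o4; o4], [:: (1, ([::], o3, o4, [:: o4])); (1, ([:: o1], o2, o4, [::])); (-1, ([::], o1, o1, [:: o3]))]);
([:: o3; o4; o5], [:: (1, ([::], o3, o4, [:: o5])); (1, ([:: o1], o2, o5, [::])); (1, ([::], o1, o0, [:: o3])); (-1, ([:: o0], o0, o6, [::])); (1, ([::], o0, o0, [:: o6]))]);
([:: o3; o4; o6], [:: (1, ([::], o3, o4, [:: o6])); (1, ([:: o1], o1, o5, [::])); (-1, ([::], o1, o1, [:: o5]))]);
([:: o3; o5; o0], [:: (1, ([::], o3, o5, [:: o0])); (1, ([:: o2], o0, o0, [::]))]);
([:: o0; o3; o5], [:: (1, ([:: o0], o3, o5, [::])); (1, ([::], o0, o2, [:: o0])); (-1, ([:: o2], o0, o0, [::]))]);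
([:: o2; o3; o5], [:: (1, ([:: o2], o3, o5, [::])); (1, ([::], o2, o2, [:: o0]))]);
([:: o3; o5; o3], [:: (1, ([::], o3, o5, [:: o3])); (-1, ([:: o2], o2, o5, [::])); (1, ([::], o2, o2, [:: o5]))]);
([:: o3; o2; o0], [:: (-1, ([:: o3], o3, o5, [::])); (1, ([::], o3, o3, [:: o5]))]);
([:: o3; o5; o5], [:: (1, ([::], o3, o5, [:: o5])); (1, ([:: o2], o2, o3, [::])); (-1, ([::], o2, o2, [:: o3]))]);
([:: o3; o6; o0], [:: (1, ([::], o3, o6, [:: o0])); (-1, ([::], o1, o0, [:: o0])); (1, ([:: o1], o0, o0, [::]))]);
([:: o0; o3; o6], [:: (1, ([:: o0], o3, o6, [::])); (-1, ([::], o0, o0, [:: o1]))]);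
([:: o3; o6; o1], [:: (1, ([::], o3, o6, [:: o1])); (-1, ([:: o0], o1, o1, [::]))]);
([:: o3; o6; o2], [:: (1, ([::], o3, o6, [:: o2]))]);
([:: o3; o6; o3], [:: (1, ([::], o3, o6, [:: o3])); (-1, ([:: o0], o0, o6, [::])); (1, ([::], o0, o0, [:: o6]))]);
([:: o3; o0; o1], [:: (1, ([:: o3], o3, o6, [::])); (-1, ([::], o3, o3, [:: o6]))]);
([:: o3; o6; o4], [:: (1, ([::], o3, o6, [:: o4])); (-1, ([:: o0], o1, o4, [::])); (1, ([::], o0, o0, [:: o5]))]);
([:: o3; o6; o5], [:: (1, ([::], o3, o6, [:: o5])); (-1, ([:: o0], o1, o5, [::])); (1, ([:: o0], o0, o4, [::])); (-1, ([::], o0, o0, [:: o4]))]);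
([:: o3; o6; o6], [:: (1, ([::], o3, o6, [:: o6])); (-1, ([:: o0], o1, o6, [::])); (-1, ([::], o0, o0, [:: o3]))]);
([:: o2; o6; o0], [:: (-1, ([::], o4, o0, [:: o0])); (1, ([:: o4], o0, o0, [::]))]);
([:: o0; o4; o0], [:: (1, ([:: o0], o4, o0, [::])); (1, ([:: o0], o0, o4, [::])); (-1, ([::], o0, o0, [:: o4]))]);
([:: o1; o4; o0], [:: (1, ([:: o1], o4, o0, [::])); (1, ([:: o1], o1, o5, [::])); (-1, ([::], o1, o1, [:: o5]))]);
([:: o2; o4; o0], [:: (1, ([:: o2], o4, o0, [::])); (1, ([::], o2, o2, [:: o6]))]);
([:: o0; o4; o1], [:: (1, ([:: o0], o4, o1, [::])); (1, ([::], o0, o0, [:: o5]))]);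
([:: o0; o5; o1], [:: (-1, ([::], o4, o1, [:: o1])); (1, ([:: o4], o1, o1, [::]))]);
([:: o1; o4; o1], [:: (1, ([:: o1], o4, o1, [::])); (1, ([:: o1], o1, o4, [::])); (-1, ([::], o1, o1, [:: o4]))]);
([:: o4; o1; o2], [:: (1, ([::], o4, o1, [:: o2])); (-1, ([::], o3, o2, [:: o2])); (1, ([:: o3], o2, o2, [::]))]);
([:: o2; o4; o1], [:: (1, ([:: o2], o4, o1, [::])); (1, ([:: o2], o2, o3, [::])); (-1, ([::], o2, o2, [:: o3]))]);
([:: o3; o0; o5], [:: (-1, ([:: o3], o4, o1, [::])); (1, ([::], o3, o4, [:: o1])); (1, ([::], o2, o1, [:: o1])); (-1, ([:: o2], o1, o1, [::]))]);
([:: o4; o2; o0], [:: (1, ([::], o4, o2, [:: o0])); (1, ([:: o1], o3, o0, [::])); (-1, ([::], o1, o0, [:: o3])); (1, ([:: o0], o0, o6, [::])); (-1, ([::], o0, o0, [:: o6]))]);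
([:: o0; o4; o2], [:: (1, ([:: o0], o4, o2, [::])); (1, ([:: o0], o0, o6, [::])); (-1, ([::], o0, o0, [:: o6]))]);
([:: o4; o2; o1], [:: (1, ([::], o4, o2, [:: o1])); (1, ([::], o3, o1, [:: o1])); (-1, ([:: o3], o1, o1, [::]))]);
([:: o1; o4; o2], [:: (1, ([:: o1], o4, o2, [::])); (1, ([::], o1, o1, [:: o3]))]);
([:: o2; o4; o2], [:: (1, ([:: o2], o4, o2, [::])); (1, ([:: o2], o2, o4, [::])); (-1, ([::], o2, o2, [:: o4]))]);
([:: o4; o2; o3], [:: (1, ([::], o4, o2, [:: o3])); (1, ([:: o1], o3, o3, [::]))]);
([:: o3; o1; o3], [:: (-1, ([:: o3], o4, o2, [::])); (1, ([::], o3, o4, [:: o2])); (1, ([:: o1], o2, o2, [::]))]);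
([:: o4; o2; o4], [:: (1, ([::], o4, o2, [:: o4])); (1, ([:: o1], o3, o4, [::])); (1, ([::], o1, o1, [:: o2]))]);
([:: o0; o4; o3], [:: (1, ([:: o0], o4, o3, [::]))]);
([:: o4; o3; o1], [:: (1, ([::], o4, o3, [:: o1])); (-1, ([::], o2, o1, [:: o1])); (1, ([:: o2], o1, o1, [::]))]);
([:: o1; o4; o3], [:: (1, ([:: o1], o4, o3, [::])); (-1, ([::], o1, o1, [:: o2]))]);
([:: o4; o3; o2], [:: (1, ([::], o4, o3, [:: o2])); (-1, ([:: o1], o2, o2, [::]))]);
([:: o4; o3; o4], [:: (1, ([::], o4, o3, [:: o4])); (-1, ([:: o1], o2, o4, [::])); (1, ([::], o1, o1, [:: o3]))]);
([:: o4; o4; o3], [:: (1, ([:: o4], o4, o3, [::])); (-1, ([::], o4, o1, [:: o2])); (1, ([::], o3, o2, [:: o2])); (-1, ([:: o3], o2, o2, [::]))]);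
([:: o4; o3; o5], [:: (1, ([::], o4, o3, [:: o5])); (-1, ([:: o1], o2, o5, [::])); (-1, ([::], o1, o0, [:: o3])); (1, ([:: o0], o0, o6, [::])); (-1, ([::], o0, o0, [:: o6]))]);
([:: o4; o3; o6], [:: (1, ([::], o4, o3, [:: o6])); (-1, ([:: o1], o1, o5, [::])); (1, ([::], o1, o1, [:: o5]))]);
([:: o4; o4; o0], [:: (1, ([::], o4, o4, [:: o0]))]);
([:: o0; o4; o4], [:: (1, ([:: o0], o4, o4, [::]))]);
([:: o4; o4; o1], [:: (1, ([::], o4, o4, [:: o1]))]);
([:: o1; o4; o4], [:: (1, ([:: o1], o4, o4, [::]))]);
([:: o4; o4; o2], [:: (1, ([::], o4, o4, [:: o2]))]);
([:: o2; o4; o4], [:: (1, ([:: o2], o4, o4, [::]))]);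
([:: o4; o4; o4], [:: (1, ([::], o4, o4, [:: o4]))]);
([:: o4; o4; o5], [:: (1, ([::], o4, o4, [:: o5]))]);
([:: o5; o4; o4], [:: (1, ([:: o5], o4, o4, [::]))]);
([:: o4; o4; o6], [:: (1, ([::], o4, o4, [:: o6]))]);
([:: o6; o4; o4], [:: (1, ([:: o6], o4, o4, [::]))]);
([:: o4; o5; o0], [:: (1, ([::], o4, o5, [:: o0])); (-1, ([::], o1, o0, [:: o0])); (1, ([:: o1], o0, o0, [::]))]);
([:: o0; o4; o5], [:: (1, ([:: o0], o4, o5, [::])); (-1, ([::], o0, o0, [:: o1]))]);
([:: o4; o5; o1], [:: (1, ([::], o4, o5, [:: o1])); (-1, ([:: o0], o1, o1, [::]))]);
([:: o4; o5; o2], [:: (1, ([::], o4, o5, [:: o2]))]);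
([:: o4; o5; o3], [:: (1, ([::], o4, o5, [:: o3])); (-1, ([:: o0], o0, o6, [::])); (1, ([::], o0, o0, [:: o6]))]);
([:: o4; o5; o4], [:: (1, ([::], o4, o5, [:: o4])); (-1, ([:: o0], o1, o4, [::])); (1, ([::], o0, o0, [:: o5]))]);
([:: o4; o0; o1], [:: (1, ([:: o4], o4, o5, [::])); (-1, ([::], o4, o4, [:: o5]))]);
([:: o4; o5; o5], [:: (1, ([::], o4, o5, [:: o5])); (-1, ([:: o0], o1, o5, [::])); (1, ([:: o0], o0, o4, [::])); (-1, ([::], o0, o0, [:: o4]))]);
([:: o4; o5; o6], [:: (1, ([::], o4, o5, [:: o6])); (-1, ([:: o0], o1, o6, [::])); (-1, ([::], o0, o0, [:: o3]))]);
([:: o4; o6; o0], [:: (1, ([::], o4, o6, [:: o0])); (-1, ([:: o2], o0, o0, [::]))]);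
([:: o0; o4; o6], [:: (1, ([:: o0], o4, o6, [::])); (-1, ([::], o0, o2, [:: o0])); (1, ([:: o2], o0, o0, [::]))]);
([:: o2; o4; o6], [:: (1, ([:: o2], o4, o6, [::])); (-1, ([::], o2, o2, [:: o0]))]);
([:: o4; o6; o3], [:: (1, ([::], o4, o6, [:: o3])); (1, ([:: o2], o2, o5, [::])); (-1, ([::], o2, o2, [:: o5]))]);
([:: o4; o6; o5], [:: (1, ([::], o4, o6, [:: o5])); (-1, ([:: o2], o2, o3, [::])); (1, ([::], o2, o2, [:: o3]))]);
([:: o0; o5; o0], [:: (1, ([::], o5, o0, [:: o0])); (-1, ([:: o5], o0, o0, [::]))]);
([:: o5; o0; o1], [:: (1, ([::], o5, o0, [:: o1])); (1, ([::], o4, o1, [:: o1])); (-1, ([:: o4], o1, o1, [::]))]);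
([:: o1; o5; o0], [:: (1, ([:: o1], o5, o0, [::])); (-1, ([:: o1], o1, o4, [::])); (1, ([::], o1, o1, [:: o4]))]);
([:: o5; o0; o2], [:: (1, ([::], o5, o0, [:: o2])); (1, ([::], o3, o2, [:: o2])); (-1, ([:: o3], o2, o2, [::]))]);
([:: o2; o5; o0], [:: (1, ([:: o2], o5, o0, [::])); (-1, ([:: o2], o2, o3, [::])); (1, ([::], o2, o2, [:: o3]))]);
([:: o4; o0; o5], [:: (1, ([:: o4], o5, o0, [::])); (-1, ([::], o4, o5, [:: o0])); (1, ([::], o1, o0, [:: o0])); (-1, ([:: o1], o0, o0, [::]))]);
([:: o5; o1; o0], [:: (1, ([::], o5, o1, [:: o0])); (-1, ([::], o4, o0, [:: o0])); (1, ([:: o4], o0, o0, [::]))]);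
([:: o2; o6; o1], [:: (-1, ([::], o5, o1, [:: o1])); (1, ([:: o5], o1, o1, [::]))]);
([:: o1; o5; o1], [:: (1, ([:: o1], o5, o1, [::])); (1, ([:: o1], o1, o5, [::])); (-1, ([::], o1, o1, [:: o5]))]);
([:: o2; o5; o1], [:: (1, ([:: o2], o5, o1, [::])); (1, ([::], o2, o2, [:: o6]))]);
([:: o4; o2; o6], [:: (-1, ([:: o4], o5, o1, [::])); (1, ([::], o4, o5, [:: o1])); (-1, ([:: o0], o1, o1, [::]))]);
([:: o5; o2; o0], [:: (1, ([::], o5, o2, [:: o0])); (-1, ([::], o3, o0, [:: o0])); (1, ([:: o3], o0, o0, [::]))]);
([:: o5; o2; o1], [:: (1, ([::], o5, o2, [:: o1])); (-1, ([:: o0], o3, o1, [::])); (1, ([:: o0], o0, o6, [::])); (-1, ([::], o0, o0, [:: o6]))]);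
([:: o1; o5; o2], [:: (1, ([:: o1], o5, o2, [::])); (-1, ([::], o1, o0, [:: o3])); (1, ([:: o0], o0, o6, [::])); (-1, ([::], o0, o0, [:: o6]))]);
([:: o2; o5; o2], [:: (1, ([:: o2], o5, o2, [::])); (1, ([:: o2], o2, o5, [::])); (-1, ([::], o2, o2, [:: o5]))]);
([:: o5; o2; o3], [:: (1, ([::], o5, o2, [:: o3])); (-1, ([:: o0], o3, o3, [::]))]);
([:: o5; o2; o4], [:: (1, ([::], o5, o2, [:: o4])); (-1, ([:: o0], o3, o4, [::]))]);
([:: o4; o0; o3], [:: (1, ([:: o4], o5, o2, [::])); (-1, ([::], o4, o5, [:: o2]))]);
([:: o5; o2; o5], [:: (1, ([::], o5, o2, [:: o5])); (-1, ([:: o0], o3, o5, [::])); (-1, ([::], o0, o2, [:: o0])); (1, ([:: o2], o0, o0, [::]))]);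
([:: o5; o2; o6], [:: (1, ([::], o5, o2, [:: o6])); (-1, ([:: o0], o3, o6, [::])); (1, ([::], o0, o0, [:: o1]))]);
([:: o5; o3; o0], [:: (1, ([::], o5, o3, [:: o0])); (-1, ([:: o2], o0, o0, [::]))]);
([:: o0; o5; o3], [:: (1, ([:: o0], o5, o3, [::])); (-1, ([::], o0, o2, [:: o0])); (1, ([:: o2], o0, o0, [::]))]);
([:: o2; o5; o3], [:: (1, ([:: o2], o5, o3, [::])); (-1, ([::], o2, o2, [:: o0]))]);
([:: o5; o3; o5], [:: (1, ([::], o5, o3, [:: o5])); (-1, ([:: o2], o2, o3, [::])); (1, ([::], o2, o2, [:: o3]))]);
([:: o5; o5; o3], [:: (1, ([:: o5], o5, o3, [::])); (-1, ([::], o5, o2, [:: o0])); (1, ([::], o3, o0, [:: o0])); (-1, ([:: o3], o0, o0, [::]))]);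
([:: o5; o4; o0], [:: (1, ([::], o5, o4, [:: o0])); (1, ([::], o1, o0, [:: o0])); (-1, ([:: o1], o0, o0, [::]))]);
([:: o0; o5; o4], [:: (1, ([:: o0], o5, o4, [::])); (1, ([::], o0, o0, [:: o1]))]);
([:: o5; o4; o1], [:: (1, ([::], o5, o4, [:: o1])); (1, ([:: o0], o1, o1, [::]))]);
([:: o5; o4; o2], [:: (1, ([::], o5, o4, [:: o2]))]);
([:: o5; o4; o3], [:: (1, ([::], o5, o4, [:: o3])); (1, ([:: o0], o0, o6, [::])); (-1, ([::], o0, o0, [:: o6]))]);
([:: o3; o5; o4], [:: (1, ([:: o3], o5, o4, [::])); (1, ([:: o3], o3, o6, [::])); (-1, ([::], o3, o3, [:: o6]))]);
([:: o5; o4; o5], [:: (1, ([::], o5, o4, [:: o5])); (1, ([:: o0], o1, o5, [::])); (-1, ([:: o0], o0, o4, [::])); (1, ([::], o0, o0, [:: o4]))]);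
([:: o5; o5; o4], [:: (1, ([:: o5], o5, o4, [::])); (1, ([::], o5, o0, [:: o1])); (1, ([::], o4, o1, [:: o1])); (-1, ([:: o4], o1, o1, [::]))]);
([:: o5; o4; o6], [:: (1, ([::], o5, o4, [:: o6])); (1, ([:: o0], o1, o6, [::])); (1, ([::], o0, o0, [:: o3]))]);
([:: o5; o5; o0], [:: (1, ([::], o5, o5, [:: o0]))]);
([:: o0; o5; o5], [:: (1, ([:: o0], o5, o5, [::]))]);
([:: o5; o5; o1], [:: (1, ([::], o5, o5, [:: o1]))]);
([:: o1; o5; o5], [:: (1, ([:: o1], o5, o5, [::]))]);
([:: o5; o5; o2], [:: (1, ([::], o5, o5, [:: o2]))]);
([:: o2; o5; o5], [:: (1, ([:: o2], o5, o5, [::]))]);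
([:: o5; o5; o5], [:: (1, ([::], o5, o5, [:: o5]))]);
([:: o5; o5; o6], [:: (1, ([::], o5, o5, [:: o6]))]);
([:: o6; o5; o5], [:: (1, ([:: o6], o5, o5, [::]))]);
([:: o0; o5; o6], [:: (1, ([:: o0], o5, o6, [::]))]);
([:: o5; o6; o1], [:: (1, ([::], o5, o6, [:: o1])); (1, ([::], o2, o1, [:: o1])); (-1, ([:: o2], o1, o1, [::]))]);
([:: o1; o5; o6], [:: (1, ([:: o1], o5, o6, [::])); (1, ([::], o1, o1, [:: o2]))]);
([:: o5; o6; o2], [:: (1, ([::], o5, o6, [:: o2])); (1, ([:: o1], o2, o2, [::]))]);
([:: o5; o6; o3], [:: (1, ([::], o5, o6, [:: o3])); (1, ([:: o1], o2, o3, [::])); (-1, ([:: o1], o1, o4, [::])); (1, ([::], o1, o1, [:: o4]))]);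
([:: o3; o5; o6], [:: (1, ([:: o3], o5, o6, [::])); (-1, ([:: o3], o3, o4, [::])); (1, ([::], o3, o3, [:: o4]))]);
([:: o5; o6; o4], [:: (1, ([::], o5, o6, [:: o4])); (1, ([:: o1], o2, o4, [::])); (-1, ([::], o1, o1, [:: o3]))]);
([:: o5; o6; o5], [:: (1, ([::], o5, o6, [:: o5])); (1, ([:: o1], o2, o5, [::])); (1, ([::], o1, o0, [:: o3])); (-1, ([:: o0], o0, o6, [::])); (1, ([::], o0, o0, [:: o6]))]);
([:: o5; o1; o2], [:: (-1, ([:: o5], o5, o6, [::])); (1, ([::], o5, o5, [:: o6]))]);
([:: o5; o6; o6], [:: (1, ([::], o5, o6, [:: o6])); (1, ([:: o1], o1, o5, [::])); (-1, ([::], o1, o1, [:: o5]))]);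
([:: o0; o6; o0], [:: (1, ([:: o0], o6, o0, [::])); (1, ([:: o0], o0, o6, [::])); (-1, ([::], o0, o0, [:: o6]))]);
([:: o6; o0; o1], [:: (1, ([::], o6, o0, [:: o1])); (1, ([::], o3, o1, [:: o1])); (-1, ([:: o3], o1, o1, [::]))]);
([:: o1; o6; o0], [:: (1, ([:: o1], o6, o0, [::])); (1, ([::], o1, o1, [:: o3]))]);
([:: o6; o0; o2], [:: (1, ([::], o6, o0, [:: o2])); (1, ([:: o1], o3, o2, [::])); (1, ([:: o1], o1, o4, [::])); (-1, ([::], o1, o1, [:: o4]))]);
([:: o6; o0; o3], [:: (1, ([::], o6, o0, [:: o3])); (1, ([:: o1], o3, o3, [::]))]);
([:: o6; o0; o4], [:: (1, ([::], o6, o0, [:: o4])); (1, ([:: o1], o3, o4, [::])); (1, ([::], o1, o1, [:: o2]))]);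
([:: o4; o1; o3], [:: (-1, ([:: o4], o6, o0, [::])); (1, ([::], o4, o6, [:: o0])); (-1, ([:: o2], o0, o0, [::]))]);
([:: o6; o1; o0], [:: (1, ([::], o6, o1, [:: o0])); (-1, ([::], o3, o0, [:: o0])); (1, ([:: o3], o0, o0, [::]))]);
([:: o0; o6; o1], [:: (1, ([:: o0], o6, o1, [::])); (-1, ([::], o0, o0, [:: o3]))]);
([:: o1; o6; o1], [:: (1, ([:: o1], o6, o1, [::])); (-1, ([::], o1, o0, [:: o3])); (1, ([:: o0], o0, o6, [::])); (-1, ([::], o0, o0, [:: o6]))]);
([:: o6; o1; o2], [:: (1, ([::], o6, o1, [:: o2])); (-1, ([:: o0], o3, o2, [::])); (-1, ([::], o0, o0, [:: o5]))]);
([:: o6; o1; o3], [:: (1, ([::], o6, o1, [:: o3])); (-1, ([:: o0], o3, o3, [::]))]);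
([:: o3; o0; o3], [:: (1, ([:: o3], o6, o1, [::])); (-1, ([::], o3, o6, [:: o1])); (1, ([:: o0], o1, o1, [::]))]);
([:: o6; o1; o4], [:: (1, ([::], o6, o1, [:: o4])); (-1, ([:: o0], o3, o4, [::]))]);
([:: o4; o6; o1], [:: (1, ([:: o4], o6, o1, [::])); (-1, ([:: o4], o5, o2, [::])); (1, ([::], o4, o5, [:: o2]))]);
([:: o6; o1; o5], [:: (1, ([::], o6, o1, [:: o5])); (-1, ([:: o0], o3, o5, [::])); (-1, ([::], o0, o2, [:: o0])); (1, ([:: o2], o0, o0, [::]))]);
([:: o5; o0; o3], [:: (1, ([:: o5], o6, o1, [::])); (-1, ([::], o5, o6, [:: o1])); (-1, ([::], o2, o1, [:: o1])); (1, ([:: o2], o1, o1, [::]))]);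
([:: o6; o1; o6], [:: (1, ([::], o6, o1, [:: o6])); (-1, ([:: o0], o3, o6, [::])); (1, ([::], o0, o0, [:: o1]))]);
([:: o6; o6; o1], [:: (1, ([:: o6], o6, o1, [::])); (-1, ([::], o6, o0, [:: o3])); (-1, ([:: o1], o3, o3, [::]))]);
([:: o6; o2; o0], [:: (1, ([::], o6, o2, [:: o0])); (1, ([::], o4, o0, [:: o0])); (-1, ([:: o4], o0, o0, [::]))]);
([:: o0; o6; o2], [:: (1, ([:: o0], o6, o2, [::])); (-1, ([:: o0], o0, o4, [::])); (1, ([::], o0, o0, [:: o4]))]);
([:: o6; o2; o1], [:: (1, ([::], o6, o2, [:: o1])); (1, ([::], o5, o1, [:: o1])); (-1, ([:: o5], o1, o1, [::]))]);
([:: o1; o6; o2], [:: (1, ([:: o1], o6, o2, [::])); (-1, ([:: o1], o1, o5, [::])); (1, ([::], o1, o1, [:: o5]))]);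
([:: o2; o6; o2], [:: (1, ([::], o6, o2, [:: o2])); (-1, ([:: o6], o2, o2, [::]))]);
([:: o3; o2; o6], [:: (1, ([:: o3], o6, o2, [::])); (-1, ([::], o3, o6, [:: o2]))]);
([:: o4; o6; o2], [:: (1, ([:: o4], o6, o2, [::])); (1, ([:: o4], o5, o1, [::])); (-1, ([::], o4, o5, [:: o1])); (1, ([:: o0], o1, o1, [::]))]);
([:: o6; o3; o0], [:: (1, ([::], o6, o3, [:: o0])); (1, ([::], o1, o0, [:: o0])); (-1, ([:: o1], o0, o0, [::]))]);
([:: o0; o6; o3], [:: (1, ([:: o0], o6, o3, [::])); (1, ([::], o0, o0, [:: o1]))]);
([:: o6; o3; o1], [:: (1, ([::], o6, o3, [:: o1])); (1, ([:: o0], o1, o1, [::]))]);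
([:: o6; o3; o2], [:: (1, ([::], o6, o3, [:: o2]))]);
([:: o6; o3; o4], [:: (1, ([::], o6, o3, [:: o4])); (1, ([:: o0], o1, o4, [::])); (-1, ([::], o0, o0, [:: o5]))]);
([:: o6; o3; o5], [:: (1, ([::], o6, o3, [:: o5])); (1, ([:: o0], o1, o5, [::])); (-1, ([:: o0], o0, o4, [::])); (1, ([::], o0, o0, [:: o4]))]);
([:: o6; o3; o6], [:: (1, ([::], o6, o3, [:: o6])); (1, ([:: o0], o1, o6, [::])); (1, ([::], o0, o0, [:: o3]))]);
([:: o6; o6; o3], [:: (1, ([:: o6], o6, o3, [::])); (1, ([::], o6, o0, [:: o1])); (1, ([::], o3, o1, [:: o1])); (-1, ([:: o3], o1, o1, [::]))]);
([:: o6; o4; o0], [:: (1, ([::], o6, o4, [:: o0])); (1, ([:: o2], o0, o0, [::]))]);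
([:: o0; o6; o4], [:: (1, ([:: o0], o6, o4, [::])); (1, ([::], o0, o2, [:: o0])); (-1, ([:: o2], o0, o0, [::]))]);
([:: o2; o6; o4], [:: (1, ([:: o2], o6, o4, [::])); (1, ([::], o2, o2, [:: o0]))]);
([:: o6; o4; o3], [:: (1, ([::], o6, o4, [:: o3])); (-1, ([:: o2], o2, o5, [::])); (1, ([::], o2, o2, [:: o5]))]);
([:: o2; o0; o4], [:: (-1, ([::], o6, o4, [:: o4])); (1, ([:: o6], o4, o4, [::]))]);
([:: o4; o6; o4], [:: (1, ([:: o4], o6, o4, [::])); (1, ([::], o4, o2, [:: o0])); (1, ([:: o1], o3, o0, [::])); (-1, ([::], o1, o0, [:: o3])); (1, ([:: o0], o0, o6, [::])); (-1, ([::], o0, o0, [:: o6]))]);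
([:: o6; o4; o5], [:: (1, ([::], o6, o4, [:: o5])); (1, ([:: o2], o2, o3, [::])); (-1, ([::], o2, o2, [:: o3]))]);
([:: o6; o6; o4], [:: (1, ([:: o6], o6, o4, [::])); (1, ([::], o6, o2, [:: o0])); (1, ([::], o4, o0, [:: o0])); (-1, ([:: o4], o0, o0, [::]))]);
([:: o0; o6; o5], [:: (1, ([:: o0], o6, o5, [::]))]);
([:: o6; o5; o1], [:: (1, ([::], o6, o5, [:: o1])); (-1, ([::], o2, o1, [:: o1])); (1, ([:: o2], o1, o1, [::]))]);
([:: o1; o6; o5], [:: (1, ([:: o1], o6, o5, [::])); (-1, ([::], o1, o1, [:: o2]))]);
([:: o6; o5; o2], [:: (1, ([::], o6, o5, [:: o2])); (-1, ([:: o1], o2, o2, [::]))]);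
([:: o6; o5; o3], [:: (1, ([::], o6, o5, [:: o3])); (-1, ([:: o1], o2, o3, [::])); (1, ([:: o1], o1, o4, [::])); (-1, ([::], o1, o1, [:: o4]))]);
([:: o6; o5; o4], [:: (1, ([::], o6, o5, [:: o4])); (-1, ([:: o1], o2, o4, [::])); (1, ([::], o1, o1, [:: o3]))]);
([:: o6; o5; o6], [:: (1, ([::], o6, o5, [:: o6])); (-1, ([:: o1], o1, o5, [::])); (1, ([::], o1, o1, [:: o5]))]);
([:: o6; o6; o5], [:: (1, ([:: o6], o6, o5, [::])); (-1, ([::], o6, o1, [:: o2])); (1, ([:: o0], o3, o2, [::])); (1, ([::], o0, o0, [:: o5]))]);
([:: o6; o6; o0], [:: (1, ([::], o6, o6, [:: o0]))]);
([:: o0; o6; o6], [:: (1, ([:: o0], o6, o6, [::]))]);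
([:: o1; o6; o6], [:: (1, ([:: o1], o6, o6, [::]))]);
([:: o6; o6; o2], [:: (1, ([::], o6, o6, [:: o2]))]);
([:: o2; o6; o6], [:: (1, ([:: o2], o6, o6, [::]))]);
([:: o4; o6; o6], [:: (1, ([:: o4], o6, o6, [::]))]);
([:: o6; o6; o6], [:: (1, ([::], o6, o6, [:: o6]))]);
([:: o2; o0; o1], [:: (1, ([::], o0, o2, [:: o1])); (-1, ([:: o0], o2, o1, [::]))]);
([:: o1; o2; o0], [:: (1, ([:: o1], o0, o2, [::])); (-1, ([::], o1, o0, [:: o2]))]);
([:: o2; o0; o2], [:: (1, ([::], o0, o2, [:: o2])); (-1, ([:: o0], o2, o2, [::]))]);
([:: o3; o0; o2], [:: (1, ([:: o3], o0, o2, [::])); (1, ([:: o3], o3, o5, [::])); (-1, ([::], o3, o3, [:: o5]))]);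
([:: o4; o0; o2], [:: (1, ([:: o4], o0, o2, [::])); (-1, ([::], o4, o2, [:: o0])); (-1, ([:: o1], o3, o0, [::])); (1, ([::], o1, o0, [:: o3])); (-1, ([:: o0], o0, o6, [::])); (1, ([::], o0, o0, [:: o6]))]);
([:: o2; o0; o6], [:: (1, ([::], o0, o2, [:: o6])); (-1, ([:: o0], o0, o4, [::])); (1, ([::], o0, o0, [:: o4]))]);
([:: o1; o0; o4], [:: (1, ([:: o1], o0, o4, [::])); (-1, ([:: o1], o1, o5, [::])); (1, ([::], o1, o1, [:: o5]))]);
([:: o2; o6; o3], [:: (1, ([::], o0, o4, [:: o3])); (-1, ([:: o0], o4, o3, [::]))]);
([:: o3; o0; o4], [:: (1, ([:: o3], o0, o4, [::])); (-1, ([:: o3], o6, o2, [::])); (1, ([::], o3, o6, [:: o2]))]);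
([:: o4; o0; o4], [:: (1, ([:: o4], o0, o4, [::])); (1, ([:: o4], o5, o1, [::])); (-1, ([::], o4, o5, [:: o1])); (1, ([:: o0], o1, o1, [::]))]);
([:: o2; o6; o5], [:: (1, ([::], o0, o4, [:: o5])); (-1, ([:: o0], o4, o5, [::])); (1, ([::], o0, o0, [:: o1]))]);
([:: o5; o0; o4], [:: (1, ([:: o5], o0, o4, [::])); (-1, ([::], o5, o2, [:: o6])); (1, ([:: o0], o3, o6, [::])); (-1, ([::], o0, o0, [:: o1]))]);
([:: o6; o2; o6], [:: (1, ([:: o6], o0, o4, [::])); (-1, ([::], o6, o0, [:: o4])); (-1, ([:: o1], o3, o4, [::])); (-1, ([::], o1, o1, [:: o2]))]);
([:: o1; o0; o6], [:: (1, ([:: o1], o0, o6, [::])); (-1, ([::], o1, o1, [:: o3]))]);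
([:: o3; o0; o6], [:: (1, ([:: o3], o0, o6, [::])); (1, ([:: o3], o4, o2, [::])); (-1, ([::], o3, o4, [:: o2])); (-1, ([:: o1], o2, o2, [::]))]);
([:: o4; o0; o6], [:: (1, ([:: o4], o0, o6, [::])); (1, ([:: o4], o6, o0, [::])); (-1, ([::], o4, o6, [:: o0])); (1, ([:: o2], o0, o0, [::]))]);
([:: o1; o3; o5], [:: (1, ([::], o0, o6, [:: o5])); (-1, ([:: o0], o6, o5, [::]))]);
([:: o1; o3; o6], [:: (1, ([::], o0, o6, [:: o6])); (-1, ([:: o0], o6, o6, [::]))]);
([:: o6; o0; o6], [:: (1, ([:: o6], o0, o6, [::])); (-1, ([::], o6, o1, [:: o3])); (1, ([:: o0], o3, o3, [::]))]);
([:: o1; o0; o1], [:: (1, ([::], o1, o0, [:: o1])); (-1, ([:: o0], o1, o1, [::]))]);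
([:: o2; o1; o0], [:: (1, ([:: o2], o1, o0, [::])); (-1, ([::], o0, o2, [:: o1])); (1, ([:: o0], o2, o1, [::]))]);
([:: o4; o1; o0], [:: (1, ([:: o4], o1, o0, [::])); (-1, ([:: o4], o4, o5, [::])); (1, ([::], o4, o4, [:: o5]))]);
([:: o2; o1; o4], [:: (1, ([:: o2], o1, o4, [::])); (-1, ([:: o2], o2, o3, [::])); (1, ([::], o2, o2, [:: o3]))]);
([:: o3; o1; o4], [:: (1, ([:: o3], o1, o4, [::])); (1, ([:: o3], o4, o1, [::])); (-1, ([::], o3, o4, [:: o1])); (-1, ([::], o2, o1, [:: o1])); (1, ([:: o2], o1, o1, [::]))]);
([:: o4; o1; o4], [:: (1, ([:: o4], o1, o4, [::])); (-1, ([:: o4], o5, o0, [::])); (1, ([::], o4, o5, [:: o0])); (-1, ([::], o1, o0, [:: o0])); (1, ([:: o1], o0, o0, [::]))]);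
([:: o1; o4; o5], [:: (1, ([::], o1, o4, [:: o5])); (-1, ([:: o0], o5, o5, [::]))]);
([:: o1; o4; o6], [:: (1, ([::], o1, o4, [:: o6])); (-1, ([:: o0], o5, o6, [::]))]);
([:: o6; o0; o5], [:: (1, ([:: o6], o1, o4, [::])); (-1, ([::], o6, o1, [:: o4])); (1, ([:: o0], o3, o4, [::]))]);
([:: o2; o1; o5], [:: (1, ([:: o2], o1, o5, [::])); (-1, ([::], o2, o2, [:: o6]))]);
([:: o1; o5; o3], [:: (1, ([::], o1, o5, [:: o3])); (-1, ([::], o0, o4, [:: o3])); (1, ([:: o0], o4, o3, [::]))]);
([:: o3; o1; o5], [:: (1, ([:: o3], o1, o5, [::])); (-1, ([:: o3], o6, o2, [::])); (1, ([::], o3, o6, [:: o2]))]);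
([:: o1; o5; o4], [:: (1, ([::], o1, o5, [:: o4])); (-1, ([:: o2], o6, o4, [::])); (-1, ([::], o2, o2, [:: o0]))]);
([:: o4; o1; o5], [:: (1, ([:: o4], o1, o5, [::])); (1, ([:: o4], o5, o1, [::])); (-1, ([::], o4, o5, [:: o1])); (1, ([:: o0], o1, o1, [::]))]);
([:: o5; o1; o5], [:: (1, ([:: o5], o1, o5, [::])); (-1, ([::], o5, o2, [:: o6])); (1, ([:: o0], o3, o6, [::])); (-1, ([::], o0, o0, [:: o1]))]);
([:: o1; o6; o3], [:: (1, ([::], o1, o6, [:: o3])); (1, ([:: o0], o3, o3, [::]))]);
([:: o3; o1; o6], [:: (1, ([:: o3], o1, o6, [::])); (1, ([:: o3], o6, o1, [::])); (-1, ([::], o3, o6, [:: o1])); (1, ([:: o0], o1, o1, [::]))]);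
([:: o1; o6; o4], [:: (1, ([::], o1, o6, [:: o4])); (1, ([:: o0], o3, o4, [::]))]);
([:: o4; o1; o6], [:: (1, ([:: o4], o1, o6, [::])); (1, ([:: o4], o5, o2, [::])); (-1, ([::], o4, o5, [:: o2]))]);
([:: o5; o1; o6], [:: (1, ([:: o5], o1, o6, [::])); (1, ([:: o5], o6, o1, [::])); (-1, ([::], o5, o6, [:: o1])); (-1, ([::], o2, o1, [:: o1])); (1, ([:: o2], o1, o1, [::]))]);
([:: o2; o1; o2], [:: (1, ([::], o2, o1, [:: o2])); (-1, ([:: o1], o2, o2, [::]))]);
([:: o3; o2; o1], [:: (1, ([:: o3], o2, o1, [::])); (1, ([:: o3], o3, o4, [::])); (-1, ([::], o3, o3, [:: o4]))]);
([:: o3; o2; o3], [:: (1, ([:: o3], o2, o3, [::])); (1, ([:: o3], o4, o1, [::])); (-1, ([::], o3, o4, [:: o1])); (-1, ([::], o2, o1, [:: o1])); (1, ([:: o2], o1, o1, [::]))]);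
([:: o2; o3; o4], [:: (1, ([::], o2, o3, [:: o4])); (-1, ([:: o0], o5, o4, [::])); (-1, ([::], o0, o0, [:: o1]))]);
([:: o5; o0; o5], [:: (1, ([:: o5], o2, o3, [::])); (-1, ([::], o5, o2, [:: o3])); (1, ([:: o0], o3, o3, [::]))]);
([:: o2; o3; o6], [:: (1, ([::], o2, o3, [:: o6])); (-1, ([:: o0], o5, o6, [::]))]);
([:: o6; o2; o3], [:: (1, ([:: o6], o2, o3, [::])); (-1, ([:: o6], o1, o4, [::])); (1, ([::], o6, o1, [:: o4])); (-1, ([:: o0], o3, o4, [::]))]);
([:: o2; o4; o3], [:: (1, ([::], o2, o4, [:: o3])); (-1, ([:: o1], o3, o3, [::]))]);
([:: o3; o2; o4], [:: (1, ([:: o3], o2, o4, [::])); (1, ([:: o3], o4, o2, [::])); (-1, ([::], o3, o4, [:: o2])); (-1, ([:: o1], o2, o2, [::]))]);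
([:: o2; o4; o5], [:: (1, ([::], o2, o4, [:: o5])); (-1, ([::], o0, o6, [:: o5])); (1, ([:: o0], o6, o5, [::]))]);
([:: o5; o1; o3], [:: (1, ([:: o5], o2, o4, [::])); (-1, ([::], o5, o2, [:: o4])); (1, ([:: o0], o3, o4, [::]))]);
([:: o6; o2; o4], [:: (1, ([:: o6], o2, o4, [::])); (-1, ([::], o6, o1, [:: o3])); (1, ([:: o0], o3, o3, [::]))]);
([:: o3; o2; o5], [:: (1, ([:: o3], o2, o5, [::])); (1, ([:: o3], o6, o1, [::])); (-1, ([::], o3, o6, [:: o1])); (1, ([:: o0], o1, o1, [::]))]);
([:: o2; o5; o4], [:: (1, ([::], o2, o5, [:: o4])); (1, ([:: o0], o3, o4, [::]))]);
([:: o4; o2; o5], [:: (1, ([:: o4], o2, o5, [::])); (1, ([:: o4], o5, o2, [::])); (-1, ([::], o4, o5, [:: o2]))]);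
([:: o2; o5; o6], [:: (1, ([::], o2, o5, [:: o6])); (1, ([:: o0], o3, o6, [::])); (-1, ([::], o0, o0, [:: o1]))]);
([:: o6; o2; o5], [:: (1, ([:: o6], o2, o5, [::])); (1, ([::], o6, o0, [:: o3])); (1, ([:: o1], o3, o3, [::]))]);
([:: o4; o3; o0], [:: (1, ([:: o4], o3, o0, [::])); (-1, ([:: o4], o5, o2, [::])); (1, ([::], o4, o5, [:: o2]))]);
([:: o5; o3; o1], [:: (1, ([:: o5], o3, o1, [::])); (-1, ([:: o5], o2, o4, [::])); (1, ([::], o5, o2, [:: o4])); (-1, ([:: o0], o3, o4, [::]))]);
([:: o5; o3; o2], [:: (1, ([:: o5], o3, o2, [::])); (1, ([:: o5], o2, o3, [::])); (-1, ([::], o5, o2, [:: o3])); (1, ([:: o0], o3, o3, [::]))]);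
([:: o3; o4; o0], [:: (1, ([::], o3, o4, [:: o0])); (1, ([:: o1], o0, o2, [::])); (-1, ([::], o1, o0, [:: o2]))]);
([:: o5; o3; o4], [:: (1, ([:: o5], o3, o4, [::])); (-1, ([:: o5], o5, o6, [::])); (1, ([::], o5, o5, [:: o6]))]);
([:: o3; o5; o1], [:: (1, ([::], o3, o5, [:: o1])); (1, ([::], o0, o2, [:: o1])); (-1, ([:: o0], o2, o1, [::]))]);
([:: o3; o5; o2], [:: (1, ([::], o3, o5, [:: o2])); (1, ([::], o0, o2, [:: o2])); (-1, ([:: o0], o2, o2, [::]))]);
([:: o5; o3; o6], [:: (1, ([:: o5], o3, o6, [::])); (-1, ([::], o5, o0, [:: o1])); (-1, ([::], o4, o1, [:: o1])); (1, ([:: o4], o1, o1, [::]))]);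
([:: o6; o4; o1], [:: (1, ([:: o6], o4, o1, [::])); (1, ([:: o6], o1, o4, [::])); (-1, ([::], o6, o1, [:: o4])); (1, ([:: o0], o3, o4, [::]))]);
([:: o6; o4; o2], [:: (1, ([:: o6], o4, o2, [::])); (1, ([::], o6, o1, [:: o3])); (-1, ([:: o0], o3, o3, [::]))]);
([:: o6; o4; o6], [:: (1, ([:: o6], o4, o6, [::])); (-1, ([::], o6, o2, [:: o0])); (-1, ([::], o4, o0, [:: o0])); (1, ([:: o4], o0, o0, [::]))]);
([:: o5; o0; o6], [:: (1, ([::], o5, o0, [:: o6])); (-1, ([:: o0], o5, o6, [::]))]);
([:: o6; o5; o0], [:: (1, ([:: o6], o5, o0, [::])); (-1, ([:: o6], o1, o4, [::])); (1, ([::], o6, o1, [:: o4])); (-1, ([:: o0], o3, o4, [::]))]);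
([:: o5; o1; o4], [:: (1, ([::], o5, o1, [:: o4])); (1, ([:: o2], o6, o4, [::])); (1, ([::], o2, o2, [:: o0]))]);
([:: o5; o6; o0], [:: (1, ([::], o5, o6, [:: o0])); (1, ([:: o1], o0, o2, [::])); (-1, ([::], o1, o0, [:: o2]))])].

Definition deg3_cert_valid : bool :=
  all (fun p => all (fun t => size t.2.1.1.1 + size t.2.2 == 1)%N p.2 &&
     all (fun a => all (fun b => all (fun c =>
        deg3_target_int p.1 [:: a; b; c] == comb_int p.2 [:: a; b; c]) ords) ords) ords)
    deg3_cert &&
  all (fun a => all (fun b => all (fun c =>
     has (fun p => p.1 == [:: a; b; c]) deg3_cert) ords) ords) ords.

Lemma deg3_certP : deg3_cert_valid.
Proof. by rewrite /deg3_cert_valid /comb_int /gen_int /rel2_int unlock; vm_compute. Qed.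

Section Degree3.
Variable k : fieldType.
Implicit Types (x y : tens k) (u v w : word).

Definition rel2 a b : tens k := fun w => (rel2_int a b w)%:~R.

Lemma rel2E a b : rel2 a b =
  (fun w => 1 * tword k [:: a; b] w + \sum_(j < 7) - eps k a b j * tword k (im_word j) w).
Proof.
apply: functional_extensionality => w.
rewrite /rel2 /rel2_int intrB intr_sum intr_nat_bool mul1r -sum_ords -sumrN.
by congr (_ + _); apply: eq_bigr => j _; rewrite intrM intr_nat_bool eps_intE mulNr.
Qed.

Lemma Rperp_rel2 a b : Rperp (rel2 a b).
Proof.
apply/RperpP; split.
  move=> w sw; rewrite rel2E tword_eq0 // mulr0 add0r.
  by rewrite big1 // => j _; rewrite tword_eq0 ?mulr0.
move=> i; rewrite rel2E psi2_lin psi2_sum psi2_tword2.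
under eq_bigr do rewrite psi2_tword2 eps_fac eq_sym mulrC.
by rewrite sum_delta mul1r addrN.
Qed.

Definition gen_tens (t : gen_term) : tens k :=
  let: (u, a, b, v) := t in tmul (tmul (tword k u) (rel2 a b)) (tword k v).

Lemma Igen_gen_tens t : Igen (gen_tens t).
Proof. by case: t => [[[u a] b] v]; exists u, v, (rel2 a b); split=> //; apply: Rperp_rel2. Qed.

Lemma gen_tensE t w : gen_tens t w = (gen_int t w)%:~R.
Proof.
case: t => [[[u a] b] v]; rewrite /gen_tens sandwichE; last by case: (Rperp_rel2 a b).
by rewrite /gen_int; case: ifP.
Qed.

Lemma tword_intE u w : tword k u w = ((w == u)%:R : int)%:~R.
Proof. by rewrite intr_nat_bool. Qed.

Lemma span_tword3_top a b c :
  in_span_Igen (fun w => tword k [:: a; b; c] w - eps k a b c * tword k top_word w).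
Proof.
case/andP: deg3_certP => /allP valid /ords_all3 /(_ a b c) /hasP [p pin /eqP pE].
have /andP [/allP hsz /ords_all3 hval] := valid p pin.
pose d : int * gen_term := (0, ([::], o0, o0, [::])).
exists (size p.2), (fun i => (nth d p.2 i).1%:~R), (fun i => gen_tens (nth d p.2 i).2).
split=> [i|w]; first exact: Igen_gen_tens.
transitivity ((deg3_target_int p.1 w)%:~R : k).
  by rewrite pE /deg3_target_int intrB intrM -!tword_intE -eps_intE.
transitivity ((comb_int p.2 w)%:~R : k); last first.
  rewrite /comb_int intr_sum (big_nth d) big_mkord; apply: eq_bigr => i _.
  by rewrite intrM gen_tensE.
congr intmul; have [sw|sw] := eqVneq (size w) 3%N.
  by case: w sw => [|x [|y [|z [|? ?]]]] // _; apply/eqP/hval.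
have neq3 u : size u = 3%N -> (w == u) = false.
  by move=> su; apply/eqP => E; rewrite E su in sw.
rewrite pE /deg3_target_int !neq3 // mulr0 subr0 /comb_int big1_seq // => -[c0 t] /andP [_ tin].
case: t tin => [[[u a0] b0] v] tin /=; have := hsz _ tin => /= huv.
rewrite ifF ?mulr0 //; apply/negbTE; rewrite !negb_and; apply/orP; left.
by apply/orP; left; apply/eqP => E; move: sw huv; rewrite E; lia.
Qed.

Lemma homog3E x : homog 3 x -> forall w,
  x w = \sum_(a < 7) \sum_(b < 7) \sum_(c < 7) x [:: a; b; c] * tword k [:: a; b; c] w.
Proof.
move=> h w; have [sw|sw] := eqVneq (size w) 3%N.
  case: w sw => [|p [|q [|r [|? ?]]]] // _.
  rewrite -(sum_delta p (fun a => x [:: a; q; r])); apply: eq_bigr => a _.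
  rewrite -(sum_delta q (fun b => x [:: a; b; r])) mulr_sumr; apply: eq_bigr => b _.
  rewrite -(sum_delta r (fun c => x [:: a; b; c])) !mulr_sumr; apply: eq_bigr => c _.
  by rewrite /tword !eqseq_cons andbT eq_sym [q == b]eq_sym [r == c]eq_sym;
    do 3!case: eqP => [->|_]; rewrite /= ?(mul1r, mul0r, mulr1, mulr0).
rewrite h // big1 // => a _; rewrite big1 // => b _; rewrite big1 // => c _.
by rewrite tword_eq0 ?mulr0.
Qed.

Lemma span_deg3 x : homog 3 x -> psi3 x = 0 -> in_span_Igen x.
Proof.
move=> h x3.
have S : in_span_Igen (fun w => \sum_(a < 7) 1 * \sum_(b < 7) 1 * \sum_(c < 7)
    x [:: a; b; c] * (tword k [:: a; b; c] w - eps k a b c * tword k top_word w)).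
  by do 2!apply: span_sum => ?; apply: span_sum => ?; apply: span_tword3_top.
apply: span_ext S _ => w.
under eq_bigr do rewrite mul1r; under eq_bigr do under eq_bigr do rewrite mul1r.
under eq_bigr do under eq_bigr do under eq_bigr do rewrite mulrBr.
under eq_bigr do under eq_bigr do rewrite sumrB.
under eq_bigr do rewrite sumrB.
rewrite sumrB -homog3E //.
suff -> : \sum_(a < 7) \sum_(b < 7) \sum_(c < 7)
    x [:: a; b; c] * (eps k a b c * tword k top_word w) = psi3 x * tword k top_word w.
  by rewrite x3 mul0r subr0.
rewrite /psi3 mulr_suml; apply: eq_bigr => a _; rewrite mulr_suml.
by apply: eq_bigr => b _; rewrite mulr_suml; apply: eq_bigr => c _; ring.
Qed.

Lemma Rperp_tword_sq a : Rperp (tword k [:: a; a]).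
Proof.
apply/RperpP; split=> [w sw|i]; first exact: tword_eq0.
by rewrite psi2_tword2 eps_diag.
Qed.

Lemma span_tword_long t : (4 <= size t)%N -> in_span_Igen (tword k t).
Proof.
case: t => [|a [|b [|c [|d r]]]] // _.
have S3 u v a' b' c' : in_span_Igen (fun w => tword k (u ++ [:: a'; b'; c'] ++ v) w
    - eps k a' b' c' * tword k (u ++ top_word ++ v) w).
  have E : tmul (fun w => tword k [:: a'; b'; c'] w - eps k a' b' c' * tword k top_word w)
      (tword k v) = fun w => tword k ([:: a'; b'; c'] ++ v) w
                             - eps k a' b' c' * tword k (top_word ++ v) w.
    by apply: functional_extensionality => w; rewrite tmul_subl !tmul_tword.
  apply: span_ext (span_tmull u (span_tmulr v (span_tword3_top a' b' c'))) _ => w.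
  by rewrite E tmul_subr !tmul_tword.
(* [xi_abc = eps^{abc} xi_123] twice turns [xi_abcdr] into a multiple of
   [xi_1 xi_1 xi_2 xi_3 r], and [xi_1 xi_1] lies in [R^perp]. *)
have S00 : in_span_Igen (tword k [:: o0, o0, o1, o2 & r]).
  apply: span_Igen; exists [::], [:: o1, o2 & r], (tword k [:: o0; o0]).
  by rewrite tmul1l tmul_tword; split=> //; apply: Rperp_tword_sq.
apply: span_ext (spanD 1 (S3 [::] (d :: r) a b c) (spanD (eps k a b c) (S3 [:: o0] r o1 o2 d)
          (spanD (eps k a b c * eps k o1 o2 d) S00 (span0 k)))) _ => w /=.
ring.
Qed.

Lemma span_homog_long n x : (4 <= n)%N -> homog n x -> in_span_Igen x.
Proof.
move=> hn h.
have S := @span_sum k _ (index_enum (n.-tuple 'I_7)) (fun t => x t) (fun t => tword k t)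
  (fun t => span_tword_long (leq_trans hn (eq_leq (esym (size_tuple t))))).
apply: span_ext S _ => w; have [sw|sw] := eqVneq (size w) n.
  pose t0 : n.-tuple 'I_7 := Tuple (introT eqP sw).
  rewrite (bigD1 t0) //= /tword eqxx mulr1 big1 ?addr0 // => t tne.
  rewrite (_ : (w == t) = false) ?mulr0 //; apply/eqP => E; move: tne.
  by rewrite (_ : t = t0) ?eqxx //; apply: val_inj; rewrite /= -E.
by rewrite h // big1 // => t _; rewrite tword_eq0 ?mulr0 // size_tuple.
Qed.

Lemma inIP x : inI x <-> null_coords x.
Proof.
split; first exact: null_coords_inI.
case=> x0 x1 x2 x3 n; have hom : homog n (hcomp n x) by apply: homog_hcomp.
case: n hom => [|[|[|[|n]]]] hom.
- by apply: span_ext (span0 k) _ => -[|a w] //=; rewrite /hcomp /= x0.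
- by apply: span_ext (span0 k) _ => -[|a [|b w]]; rewrite /hcomp //= x1.
- apply: span_Igen; exists [::], [::], (hcomp 2 x); rewrite tmul1l tmul1r.
  by split=> //; apply/RperpP; split=> // i; exact: x2.
- exact: (span_deg3 hom x3).
- by apply: (span_homog_long (n := n.+4)) hom.
Qed.

End Degree3.

Section TFunctional.
Variables (k : fieldType) (f : tens k -> k).
Hypothesis hf : tfunctional f.
Implicit Types (x y : tens k).

Lemma tfunctional_lin c x y : f (fun w => c * x w + y w) = c * f x + f y.
Proof. exact: hf. Qed.

Lemma tfunctional0 : f (fun _ => 0) = 0.
Proof.
have : f (fun _ => 0) = f (fun _ => 0) + f (fun _ => 0).
  rewrite -{2}(mul1r (f (fun _ => 0))) -tfunctional_lin; congr f.
  by apply: functional_extensionality => w; rewrite mulr0 addr0.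
by move/(congr1 (fun t => t - f (fun _ => 0))); rewrite subrr addrK => <-.
Qed.

Lemma tfunctionalD x y : f (fun w => x w + y w) = f x + f y.
Proof.
rewrite -[f x]mul1r -tfunctional_lin; congr f.
by apply: functional_extensionality => w; rewrite mul1r.
Qed.

Lemma tfunctionalZ c x : f (fun w => c * x w) = c * f x.
Proof.
rewrite -[RHS]addr0 -tfunctional0 -tfunctional_lin; congr f.
by apply: functional_extensionality => w; rewrite addr0.
Qed.

Lemma tfunctional_sum (I : Type) (s : seq I) (d : I -> k) (g : I -> tens k) :
  f (fun w => \sum_(j <- s) d j * g j w) = \sum_(j <- s) d j * f (g j).
Proof.
elim: s => [|j s IH].
  have -> : (fun w => \sum_(i <- [::]) d i * g i w) = (fun _ => 0).
    by apply: functional_extensionality => w; rewrite big_nil.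
  by rewrite tfunctional0 big_nil.
have -> : (fun w => \sum_(i <- j :: s) d i * g i w) =
          (fun w => d j * g j w + \sum_(i <- s) d i * g i w).
  by apply: functional_extensionality => w; rewrite big_cons.
by rewrite tfunctional_lin IH big_cons.
Qed.

End TFunctional.

Section Frobenius.
Variable k : fieldType.
Implicit Types (x y : tens k).

Lemma psi2_im_words (c : 'I_7 -> k) i :
  psi2 (fun w => \sum_(j < 7) c j * tword k (im_word j) w) i = c i.
Proof.
rewrite psi2_sum; under eq_bigr do rewrite psi2_tword2 eps_fac eq_sym mulrC.
exact: sum_delta.
Qed.

Lemma psi3_top c : psi3 (fun w => c * tword k top_word w) = c.
Proof. by rewrite psi3Z psi3_tword3 eps_top mulr1. Qed.

Definition basis_comb (c0 : k) (c1 c2 : 'I_7 -> k) (c3 : k) : tens k := fun w =>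
  c0 * tword k [::] w + (\sum_(a < 7) c1 a * tword k [:: a] w
  + (\sum_(i < 7) c2 i * tword k (im_word i) w + c3 * tword k top_word w)).

Section BasisComb.
Variables (c0 c3 : k) (c1 c2 : 'I_7 -> k).
Let z := basis_comb c0 c1 c2 c3.

Lemma basis_comb_nil : z [::] = c0.
Proof.
rewrite /z /basis_comb; have -> : tword k [::] [::] = 1 by rewrite /tword eqxx.
rewrite mulr1 tword_eq0 // mulr0 addr0 !big1 ?addr0 // => j _;
  by rewrite tword_eq0 ?mulr0.
Qed.

Lemma basis_comb1 a : z [:: a] = c1 a.
Proof.
rewrite /z /basis_comb (@tword_eq0 k [::]) // (@tword_eq0 k top_word) //.
rewrite !mulr0 add0r addr0 [X in _ + X]big1 => [|i _]; last by rewrite tword_eq0 ?mulr0.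
rewrite addr0 -(sum_delta a c1); apply: eq_bigr => b _.
by rewrite /tword eqseq_cons andbT mulrC.
Qed.

Lemma psi2_basis_comb i : psi2 z i = c2 i.
Proof.
rewrite -(psi2_im_words c2 i); apply: psi2_ext => m n.
rewrite /z /basis_comb (@tword_eq0 k [::]) // (@tword_eq0 k top_word) //.
by rewrite !mulr0 add0r addr0 big1 ?add0r // => a _; rewrite tword_eq0 ?mulr0.
Qed.

Lemma psi3_basis_comb : psi3 z = c3.
Proof.
rewrite -(psi3_top c3); apply: psi3_ext => a b c.
rewrite /z /basis_comb (@tword_eq0 k [::]) // mulr0 add0r.
by rewrite !big1 ?add0r // => j _; rewrite tword_eq0 ?mulr0.
Qed.

Lemma tfunctional_basis_comb (f : tens k -> k) : tfunctional f ->
  f z = c0 * f (tword k [::]) + (\sum_(a < 7) c1 a * f (tword k [:: a])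
        + (\sum_(i < 7) c2 i * f (tword k (im_word i)) + c3 * f (tword k top_word))).
Proof.
move=> hf; rewrite /z /basis_comb (tfunctional_lin hf) (tfunctionalD hf).
by rewrite (tfunctional_sum hf) (tfunctionalD hf) (tfunctional_sum hf) (tfunctionalZ hf).
Qed.

End BasisComb.

Definition normal_form x : tens k :=
  basis_comb (x [::]) (fun a => x [:: a]) (psi2 x) (psi3 x).

Lemma inI_sub_normal_form x : inI (fun w => x w - normal_form x w).
Proof.
apply/inIP; split=> [|a|i|]; rewrite ?psi2_sub ?psi3_sub /normal_form.
- by rewrite basis_comb_nil subrr.
- by rewrite basis_comb1 subrr.
- by rewrite psi2_basis_comb subrr.
- by rewrite psi3_basis_comb subrr.
Qed.

Lemma homog2_inIP x : homog 2 x -> (forall i, psi2 x i = 0) <-> inI x.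
Proof.
move=> h; split=> [x2|/inIP [] //]; apply/inIP; split=> // [|a|]; rewrite ?h //.
by rewrite /psi3 !big1 // => a _; rewrite !big1 // => b _; rewrite big1 // => c _; rewrite h ?mulr0.
Qed.

Lemma homog3_inIP x : homog 3 x -> psi3 x = 0 <-> inI x.
Proof.
move=> h; split=> [x3|/inIP [] //]; apply/inIP; split=> // [|a|i]; rewrite ?h //.
by rewrite /psi2 !big1 // => m _; rewrite big1 // => n _; rewrite h ?mulr0.
Qed.

Lemma ident_ImO_psi2 : ident_ImO 2 (@psi2 k).
Proof.
split; first by move=> c x y i; apply: psi2_lin.
split; first exact: homog2_inIP.
move=> v; exists (fun w => \sum_(j < 7) v j * tword k (im_word j) w); split.
  by move=> w sw; rewrite big1 // => j _; rewrite tword_eq0 ?mulr0.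
exact: psi2_im_words.
Qed.

Lemma ident_k_psi3 : ident_k 3 (@psi3 k).
Proof.
split; first by move=> c x y; apply: psi3_lin.
split; first exact: homog3_inIP.
move=> v; exists (fun w => v * tword k top_word w); split; last exact: psi3_top.
by move=> w sw; rewrite tword_eq0 ?mulr0.
Qed.

Lemma psi2_tmul_deg1 (u v : tens k) : homog 1 u -> homog 1 v ->
  forall i, psi2 (tmul u v) i = oIm (omul (imO (iota1 u)) (imO (iota1 v))) i.
Proof.
move=> hu hv i; rewrite /psi2 /omul /imO /iota1 /= !mul0r !add0r.
apply: eq_bigr => m _; apply: eq_bigr => n _.
by rewrite tmul2 (hu [::]) // (hu [:: m; n]) // (hv [::]) //; ring.
Qed.

Lemma psi3_tmul_deg1 (u v w : tens k) : homog 1 u -> homog 1 v -> homog 1 w ->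
  psi3 (tmul (tmul u v) w)
    = - oRe (omul (omul (imO (iota1 u)) (imO (iota1 v))) (imO (iota1 w))).
Proof.
move=> hu hv hw; rewrite /psi3 /omul /imO /iota1 /= !mul0r !mulr0 !add0r opprK.
under [RHS]eq_bigr do rewrite !mul0r !add0r.
under eq_bigr do rewrite exchange_big.
rewrite exchange_big; apply: eq_bigr => c _; rewrite mulr_suml.
apply: eq_bigr => a _; rewrite mulr_suml; apply: eq_bigr => b _.
rewrite tmul3 tmul2 (hw [::]) // (hw [:: a; b; c]) // (hw [:: b; c]) //.
by rewrite (hu [::]) // (hu [:: a; b]) // (hv [::]) //; ring.
Qed.

Lemma fin_dim_A : fin_dim_Ashriek k.
Proof.
exists 4%N => x x0; apply/inIP; split=> [|a|i|]; rewrite ?x0 //.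
  by rewrite /psi2 !big1 // => m _; rewrite big1 // => n _; rewrite x0 ?mulr0.
by rewrite /psi3 !big1 // => a _; rewrite !big1 // => b _; rewrite big1 // => c _;
  rewrite x0 ?mulr0.
Qed.

Definition frob_form x y : k := psi3 (tmul x y).

Lemma frob_basis_comb x c0 c1 c2 c3 : frob_form x (basis_comb c0 c1 c2 c3) =
  x [::] * c3 + \sum_(a < 7) x [:: a] * c2 a + \sum_(i < 7) psi2 x i * c1 i + psi3 x * c0.
Proof.
rewrite /frob_form psi3_tmul psi3_basis_comb basis_comb_nil.
by congr (_ + _ + _ + _); apply: eq_bigr => i _; rewrite ?psi2_basis_comb ?basis_comb1.
Qed.

Lemma frob_nondeg x : (forall y, frob_form x y = 0) -> inI x.
Proof.
pose d (i : 'I_7) : 'I_7 -> k := fun j => (i == j)%:R.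
have sum_d (F : 'I_7 -> k) i : \sum_(j < 7) F j * d i j = F i.
  by rewrite -(sum_delta i F); apply: eq_bigr => j _; rewrite mulrC.
move=> H; apply/inIP; split=> [|a|i|].
- have := H (basis_comb 0 (fun=> 0) (fun=> 0) 1); rewrite frob_basis_comb.
  by rewrite !big1 => [|*|*]; rewrite ?mulr0 ?mulr1 ?addr0.
- have := H (basis_comb 0 (fun=> 0) (d a) 0); rewrite frob_basis_comb sum_d.
  by rewrite big1 => [|*]; rewrite ?mulr0 ?add0r ?addr0.
- have := H (basis_comb 0 (d i) (fun=> 0) 0); rewrite frob_basis_comb sum_d.
  by rewrite big1 => [|*]; rewrite ?mulr0 ?add0r ?addr0.
- have := H (basis_comb 1 (fun=> 0) (fun=> 0) 0); rewrite frob_basis_comb.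
  by rewrite !big1 => [|*|*]; rewrite ?mulr0 ?mulr1 ?add0r.
Qed.

Lemma frob_normal_form x y : frob_form x y = frob_form x (normal_form y).
Proof.
rewrite /frob_form !psi3_tmul /normal_form basis_comb_nil psi3_basis_comb.
by congr (_ + _ + _ + _); apply: eq_bigr => i _; rewrite ?psi2_basis_comb ?basis_comb1.
Qed.

Lemma frob_inIr x y : inI y -> frob_form x y = 0.
Proof.
move/inIP=> [y0 y1 y2 y3]; rewrite /frob_form psi3_tmul y0 y3 !mulr0 addr0 !big1 ?addr0 //.
  by move=> i _; rewrite y1 mulr0.
by move=> a _; rewrite y2 mulr0.
Qed.

Lemma frob_repr (f : tens k -> k) : tfunctional f -> (forall y, inI y -> f y = 0) ->
  exists x, forall y, f y = frob_form x y.
Proof.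
move=> hf hI; exists (basis_comb (f (tword k top_word)) (fun a => f (tword k (im_word a)))
                       (fun i => f (tword k [:: i])) (f (tword k [::]))) => y.
have -> : f y = f (normal_form y).
  have := hI _ (inI_sub_normal_form y).
  have -> : (fun w => y w - normal_form y w) = tadd (tscale (-1) (normal_form y)) y.
    by apply: functional_extensionality => w; rewrite /tadd /tscale mulN1r addrC.
  by rewrite hf mulN1r addrC => /eqP; rewrite subr_eq0 => /eqP.
rewrite frob_normal_form /normal_form frob_basis_comb tfunctional_basis_comb //.
rewrite basis_comb_nil psi3_basis_comb.
under [X in _ = _ + X + _ + _]eq_bigr do rewrite basis_comb1 mulrC.
under [X in _ = _ + _ + X + _]eq_bigr do rewrite psi2_basis_comb mulrC.
ring.
Qed.

Lemma bimod_iso_dual_frob : bimod_iso_dual frob_form.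
Proof.
split.
  move=> x c y y'; rewrite /frob_form.
  have -> : tmul x (tadd (tscale c y) y') = (fun w => c * tmul x y w + tmul x y' w).
    by apply: functional_extensionality => w; rewrite /tadd /tscale tmul_linr.
  exact: psi3_lin.
split.
  move=> y c x x'; rewrite /frob_form.
  have -> : tmul (tadd (tscale c x) x') y = (fun w => c * tmul x y w + tmul x' y w).
    by apply: functional_extensionality => w; rewrite /tadd /tscale tmul_linl.
  exact: psi3_lin.
split; first exact: frob_inIr.
split; first by move=> x y Ix; rewrite /frob_form psi3_tmulC; apply: frob_inIr.
split; first by move=> a x b y; rewrite /frob_form !tmulA psi3_tmulC !tmulA.
split; first exact: frob_nondeg.
exact: frob_repr.
Qed.

End Frobenius.

Theorem proposition5p3 (k : fieldType) (hk : (2 \notin [pchar k])%N) :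
  (exists psi2 : tens k -> 'I_7 -> k,
     ident_ImO 2 psi2 /\
     forall u v : tens k, homog 1 u -> homog 1 v ->
       forall i, psi2 (tmul u v) i = oIm (omul (imO (iota1 u)) (imO (iota1 v))) i) /\
  (exists psi3 : tens k -> k,
     ident_k 3 psi3 /\
     forall u v w : tens k, homog 1 u -> homog 1 v -> homog 1 w ->
       psi3 (tmul (tmul u v) w)
         = - oRe (omul (omul (imO (iota1 u)) (imO (iota1 v))) (imO (iota1 w)))) /\
  sym_frobenius_Ashriek k.
Proof.
split; first by exists (@psi2 k); split; [exact: ident_ImO_psi2 | exact: psi2_tmul_deg1].
split; first by exists (@psi3 k); split; [exact: ident_k_psi3 | exact: psi3_tmul_deg1].
by split; [exact: fin_dim_A | exists (@frob_form k); exact: bimod_iso_dual_frob].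
Qed.
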